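(* For any programs $\Pi_1$ and $\Pi_2$ of mini-gringo with counting, if the sentence $\tau^*\Pi_1\leftrightarrow\tau^*\Pi_2$ is provable in the deductive system $\mathit{HT}_{\#}$, then $\Pi_1$ and $\Pi_2$ are strongly equivalent.
   Context: Precomputed terms. Fix a totally ordered set of precomputed terms containing all numerals $\overline n$ (one for each integer $n$, in 1-1 correspondence with the integers), all symbolic constants, and possibly other symbols, such that numerals are contiguous (every precomputed term between two numerals is a numeral) and are ordered as the integers. Programs (mini-gringo with counting). Program terms are built from precomputed terms and variables using unary $|\cdot|$ and binary $+,-,\times,/,\backslash,..$ (interval). An atom is a symbolic constant $p$ optionally followed by a parenthesized tuple of terms; a literal is an atom possibly preceded by one or two occurrences of $\mathit{not}$; a comparison is $t_1\prec t_2$ with $\prec$ one of $=,\neq,<,>,\le,\ge$. An aggregate element is $\mathbf X:\mathbf L$ where $\mathbf X$ is a tuple of distinct variables and $\mathbf L$ is a conjunction of literals and comparisons in which every member of $\mathbf X$ occurs. An aggregate atom is $\mathit{count}\{E\}\ge t$ or $\mathit{count}\{E\}\le t$ with $E$ an aggregate element and $t$ a term not containing $..$. A rule is $\mathit{Head}\leftarrow\mathit{Body}$ where $\mathit{Body}$ is a (possibly empty) conjunction of literals, comparisons and aggregate atoms, and $\mathit{Head}$ is an atom (basic rule), an atom in braces (choice rule), or empty (constraint). A variable of a rule is local if each of its occurrences is inside an aggregate element, global otherwise; a rule is pure if for every aggregate element $\mathbf X:\mathbf L$ in its body all members of $\mathbf X$ are local. A program is a finite set of pure rules. Semantics. A precomputed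 atom is $p(\mathbf t)$ with all members of $\mathbf t$ precomputed terms. The semantics of mini-gringo with counting (Lifschitz 2022) uses a translation $\tau$ mapping each pure rule $R$ to an infinitary propositional formula $\tau R$ built from precomputed atoms (e.g. $q\leftarrow\mathit{count}\{X:p(X)\}\le 5$ becomes $(\bigwedge_{\Delta:|\Delta|>5}\neg\bigwedge_{x\in\Delta}p(x))\to q$, $\Delta$ ranging over finite sets of precomputed terms); $\tau\Pi$ is the conjunction of $\tau R$ over rules $R$ of $\Pi$. Stable models of $\Pi$ are the stable models of $\tau\Pi$ in the sense of Truszczyński (2012). Programs $\Pi_1,\Pi_2$ are strongly equivalent if for every set $\Phi$ of infinitary propositional formulas built from precomputed atoms, $\{\tau\Pi_1\}\cup\Phi$ and $\{\tau\Pi_2\}\cup\Phi$ have the same stable models. Signatures. Formulas are two-sorted, with sort general and its subsort integer; integer variables are written $I,J,K,M,N$ (possibly with indices); program variables are general variables. Signature $\sigma_0$: numerals as integer object constants; other precomputed terms as general object constants; $|\cdot|$ (unary) and $+,-,\times$ (binary) as function constants on the integer sort; for each symbolic constant $p$ and $n\ge0$ an $n$-ary predicate constant $p/n$ with general arguments ($(p/n)(\mathbf t)$ is written $p(\mathbf t)$); binary predicate constants $\neq,<,>,\le,\ge$ with general arguments ($=$ is logical equality). Signature $\sigma_1$ adds, for every pair of disjoint lists $\mathbf X,\mathbf V$ of distinct general variables and every formula $F$ over $\sigma_0$ whose free variables are among $\mathbf X,\mathbf V$, predicate constants $\mathit{Atleast}^{\mathbf X;\mathbf V}_F$ and $\mathit{Atmost}^{\mathbf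 X;\mathbf V}_F$ with $|\mathbf V|+1$ general arguments. Signature $\sigma_2$ adds, for the same $\mathbf X,\mathbf V,F$, predicate constants $\mathit{Start}^{\mathbf X;\mathbf V}_F$ with $|\mathbf X|+|\mathbf V|+1$ arguments, the last of sort integer and the others general. Translation $\tau^*$. For a program term $t$ and a general variable $Z$ not in $t$, the formula $\mathit{val}_t(Z)$ over $\sigma_0$ is defined recursively ($I,J,K$ fresh integer variables): if $t$ is a precomputed term or variable, $Z=t$; if $t=|t_1|$, $\exists I(\mathit{val}_{t_1}(I)\wedge Z=|I|)$; if $t=t_1\,op\,t_2$ with $op\in\{+,-,\times\}$, $\exists IJ(\mathit{val}_{t_1}(I)\wedge\mathit{val}_{t_2}(J)\wedge Z=I\,op\,J)$; if $t=t_1/t_2$, $\exists IJK(\mathit{val}_{t_1}(I)\wedge\mathit{val}_{t_2}(J)\wedge K\times|J|\le|I|<(K+\overline1)\times|J|\wedge((I\times J\ge\overline0\wedge Z=K)\vee(I\times J<\overline0\wedge Z=-K)))$; if $t=t_1\backslash t_2$, the same with $Z=I-K\times J$ and $Z=I+K\times J$ in place of $Z=K$ and $Z=-K$; if $t=t_1..t_2$, $\exists IJK(\mathit{val}_{t_1}(I)\wedge\mathit{val}_{t_2}(J)\wedge I\le K\le J\wedge Z=K)$. For tuples, $\mathit{val}_{\mathbf t}(\mathbf Z)$ is the conjunction of the componentwise formulas. With fresh general variables: $\tau^B(p(\mathbf t))=\exists\mathbf Z(\mathit{val}_{\mathbf t}(\mathbf Z)\wedge p(\mathbf Z))$; $\tau^B(\mathit{not}\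 p(\mathbf t))=\exists\mathbf Z(\mathit{val}_{\mathbf t}(\mathbf Z)\wedge\neg p(\mathbf Z))$; $\tau^B(\mathit{not}\ \mathit{not}\ p(\mathbf t))=\exists\mathbf Z(\mathit{val}_{\mathbf t}(\mathbf Z)\wedge\neg\neg p(\mathbf Z))$; $\tau^B(t_1\prec t_2)=\exists Z_1Z_2(\mathit{val}_{t_1}(Z_1)\wedge\mathit{val}_{t_2}(Z_2)\wedge Z_1\prec Z_2)$; $\tau^B$ of a conjunction is the conjunction of the $\tau^B$ of its members. For a body element $B$: $B^*=\tau^B(B)$ if $B$ is a literal or comparison; if $B$ is $\mathit{count}\{\mathbf X:\mathbf L\}\ge t$ then $B^*=\exists C(\mathit{val}_t(C)\wedge\mathit{Atleast}^{\mathbf X;\mathbf V}_{\exists\mathbf W\tau^B(\mathbf L)}(\mathbf V,C))$, and for $\le$ the same with $\mathit{Atmost}$, where $C$ is a fresh general variable, $\mathbf V$ is the list of global variables occurring in $\mathbf L$, and $\mathbf W$ the list of local variables occurring in $\mathbf L$ not in $\mathbf X$. For a rule $H\leftarrow B_1\wedge\dots\wedge B_n$, $\tau^*$ of the rule is the universal closure of $B_1^*\wedge\dots\wedge B_n^*\wedge\mathit{val}_{\mathbf t}(\mathbf Z)\to p(\mathbf Z)$ if $H$ is $p(\mathbf t)$; of $B_1^*\wedge\dots\wedge B_n^*\wedge\mathit{val}_{\mathbf t}(\mathbf Z)\to p(\mathbf Z)\vee\neg p(\mathbf Z)$ if $H$ is $\{p(\mathbf t)\}$; of $\neg(B_1^*\wedge\dots\wedge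 B_n^* )$ if $H$ is empty ($\mathbf Z$ fresh general variables). $\tau^*\Pi$ is the conjunction of $\tau^*R$ for $R\in\Pi$. System $\mathit{HT}_{\#}$. $F^X_t$ denotes substitution of $t$ for the free occurrences of $X$ in $F$. For equal-length tuples of general variables, $(X_1,\dots,X_m)<(U_1,\dots,U_m)$ abbreviates $\bigvee_{l=1}^m(X_l<U_l\wedge\bigwedge_{k=1}^{l-1}X_k=U_k)$. An interpretation of $\sigma_0$ is standard if its general domain is the set of precomputed terms, its integer domain the set of numerals, every object constant denotes itself, $|\cdot|,+,-,\times$ have their arithmetic meaning, and $\neq,<,>,\le,\ge$ are interpreted by the total order on precomputed terms. $\mathit{Std}$ is the set of sentences over $\sigma_0$ containing no predicate symbol $p/n$ that are satisfied by standard interpretations. $D_0$ consists of, for all $\mathbf X,\mathbf V,F$ as in the definition of $\sigma_2$ and $\mathbf U$ a list of distinct general variables of the length of $\mathbf X$ disjoint from $\mathbf X$ and $\mathbf V$: $\forall\mathbf X\mathbf VN(N\le\overline0\to\mathit{Start}^{\mathbf X;\mathbf V}_F(\mathbf X,\mathbf V,N))$; $\forall\mathbf X\mathbf V(\mathit{Start}^{\mathbf X;\mathbf V}_F(\mathbf X,\mathbf V,\overline1)\leftrightarrow F)$; $\forall\mathbf X\mathbf VN(N>\overline0\to(\mathit{Start}^{\mathbf X;\mathbf V}_F(\mathbf X,\mathbf V,N+\overline1)\leftrightarrow F\wedge\exists\mathbf U(\mathbf X<\mathbf U\wedge\mathit{Start}^{\mathbf X;\mathbf V}_F(\mathbf U,\mathbf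 V,N))))$. $D_1$ consists of $\forall\mathbf VY(\mathit{Atleast}^{\mathbf X;\mathbf V}_F(\mathbf V,Y)\leftrightarrow\exists\mathbf XN(\mathit{Start}^{\mathbf X;\mathbf V}_F(\mathbf X,\mathbf V,N)\wedge N\ge Y))$ and $\forall\mathbf VY(\mathit{Atmost}^{\mathbf X;\mathbf V}_F(\mathbf V,Y)\leftrightarrow\forall\mathbf XN(\mathit{Start}^{\mathbf X;\mathbf V}_F(\mathbf X,\mathbf V,N)\to N\le Y))$ ($Y$ a general variable). $\mathit{Ind}$ is the set of universal closures of $F^N_{\overline0}\wedge\forall N(N\ge\overline0\wedge F\to F^N_{N+\overline1})\to\forall N(N\ge\overline0\to F)$ for formulas $F$ over $\sigma_2$. $\mathit{HT}_{\#}$ is first-order intuitionistic logic with equality for the two-sorted signature $\sigma_2$, extended by all formulas $F\vee(F\to G)\vee\neg G$ and $\exists X(F\to\forall X\,F)$ ($F,G$ over $\sigma_2$, $X$ a variable of either sort), and by the axioms $\mathit{Std}$, $\mathit{Ind}$, $D_0$, $D_1$. *)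

From Stdlib Require Import ZArith List Arith Bool ClassicalEpsilon.
Import ListNotations.

(** * Precomputed terms *)

(** A totally ordered set of precomputed terms, containing the numerals
    (injective image of Z), the symbolic constants (injective image of nat),
    and possibly other symbols; numerals are contiguous and ordered as Z. *)
Record PT : Type := {
  pt : Type;
  num : Z -> pt;
  symc : nat -> pt;
  ptlt : pt -> pt -> Prop;
  num_inj : forall n m, num n = num m -> n = m;
  symc_inj : forall a b, symc a = symc b -> a = b;
  num_symc : forall n a, num n <> symc a;
  ptlt_irrefl : forall x, ~ ptlt x x;
  ptlt_trans : forall x y z, ptlt x y -> ptlt y z -> ptlt x z;
  ptlt_total : forall x y, ptlt x y \/ x = y \/ ptlt y x;
  num_lt : forall n m, ptlt (num n) (num m) <-> (n < m)%Z;
  num_contig : forall n m x, ptlt (num n) x -> ptlt x (num m) -> exists k, x = num k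
}.

(** * Syntax of programs (mini-gringo with counting) *)

(** Program variables are named by natural numbers; symbolic constants used
    as predicate names are named by natural numbers too (p is [symc p]). *)
Inductive binop : Type := OAdd | OSub | OMul | ODiv | OMod.

Inductive pterm (T : Type) : Type :=
| PCst (c : T)
| PVar (v : nat)
| PAbs (t : pterm T)
| PBin (o : binop) (t1 t2 : pterm T)
| PIntv (t1 t2 : pterm T).
Arguments PCst {T} c.  Arguments PVar {T} v.  Arguments PAbs {T} t.
Arguments PBin {T} o t1 t2.  Arguments PIntv {T} t1 t2.

Inductive rel : Type := REq | RNeq | RLt | RGt | RLe | RGe.
Inductive sign : Type := SPos | SNot | SNotNot.

Inductive lit (T : Type) : Type :=
| LAtom (s : sign) (p : nat) (ts : list (pterm T))
| LCmp (r : rel) (t1 t2 : pterm T).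
Arguments LAtom {T} s p ts.  Arguments LCmp {T} r t1 t2.

Inductive aggop : Type := AGe | ALe.

(** body elements: literal/comparison, or count{X : L} >= t / <= t *)
Inductive belem (T : Type) : Type :=
| BLit (l : lit T)
| BCount (o : aggop) (X : list nat) (L : list (lit T)) (t : pterm T).
Arguments BLit {T} l.  Arguments BCount {T} o X L t.

Inductive head (T : Type) : Type :=
| HAtom (p : nat) (ts : list (pterm T))
| HChoice (p : nat) (ts : list (pterm T))
| HEmpty.
Arguments HAtom {T} p ts.  Arguments HChoice {T} p ts.  Arguments HEmpty {T}.

Record rule (T : Type) : Type := mkRule { rhead : head T; rbody : list (belem T) }.
Arguments mkRule {T} rhead rbody.  Arguments rhead {T} r.  Arguments rbody {T} r.

Definition program (T : Type) := list (rule T).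

Fixpoint tvars {T} (t : pterm T) : list nat :=
  match t with
  | PCst _ => []
  | PVar v => [v]
  | PAbs a => tvars a
  | PBin _ a b => tvars a ++ tvars b
  | PIntv a b => tvars a ++ tvars b
  end.

Definition lvars {T} (l : lit T) : list nat :=
  match l with
  | LAtom _ _ ts => flat_map tvars ts
  | LCmp _ a b => tvars a ++ tvars b
  end.

Definition Lvars {T} (L : list (lit T)) : list nat := flat_map lvars L.

(** occurrences outside aggregate elements *)
Definition outer_vars {T} (b : belem T) : list nat :=
  match b with
  | BLit l => lvars l
  | BCount _ _ _ t => tvars t
  end.

Definition head_vars {T} (h : head T) : list nat :=
  match h with
  | HAtom _ ts | HChoice _ ts => flat_map tvars ts
  | HEmpty => []
  end.

Definition globals {T} (R : rule T) : list nat :=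
  nodup Nat.eq_dec (head_vars (rhead R) ++ flat_map outer_vars (rbody R)).

(** V: global variables occurring in L;  W: local variables of L not in X *)
Definition vvars {T} (R : rule T) (L : list (lit T)) : list nat :=
  filter (fun v => if in_dec Nat.eq_dec v (globals R) then true else false)
         (nodup Nat.eq_dec (Lvars L)).
Definition wvars {T} (R : rule T) (X : list nat) (L : list (lit T)) : list nat :=
  filter (fun v => if in_dec Nat.eq_dec v (globals R) then false
                   else if in_dec Nat.eq_dec v X then false else true)
         (nodup Nat.eq_dec (Lvars L)).

Fixpoint no_intv {T} (t : pterm T) : Prop :=
  match t with
  | PCst _ | PVar _ => True
  | PAbs a => no_intv a
  | PBin _ a b => no_intv a /\ no_intv b
  | PIntv _ _ => False
  end.

(** well-formed aggregate atoms; purity: the members of X are local *)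
Definition wf_belem {T} (R : rule T) (b : belem T) : Prop :=
  match b with
  | BLit _ => True
  | BCount _ X L t =>
      NoDup X /\ (forall x, In x X -> In x (Lvars L)) /\ no_intv t /\
      (forall x, In x X -> ~ In x (globals R))
  end.

Definition wf_rule {T} (R : rule T) : Prop := forall b, In b (rbody R) -> wf_belem R b.
Definition wf_program {T} (Pi : program T) : Prop := forall R, In R Pi -> wf_rule R.

(** * Infinitary propositional formulas and stable models (Truszczynski 2012) *)

Inductive iform (A : Type) : Type :=
| IBot
| IAtom (a : A)
| IAnd (I : Type) (f : I -> iform A)
| IOr (I : Type) (f : I -> iform A)
| IImp (F G : iform A).
Arguments IBot {A}.  Arguments IAtom {A} a.  Arguments IAnd {A} I f.
Arguments IOr {A} I f.  Arguments IImp {A} F G.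

Definition iTop {A} : iform A := IAnd False (fun e => match e with end).
Definition iNeg {A} (F : iform A) : iform A := IImp F IBot.
Definition iOr2 {A} (F G : iform A) : iform A := IOr bool (fun b => if b then F else G).

Fixpoint isat {A} (M : A -> Prop) (F : iform A) : Prop :=
  match F with
  | IBot => False
  | IAtom a => M a
  | IAnd Ix f => forall i, isat M (f i)
  | IOr Ix f => exists i, isat M (f i)
  | IImp F G => isat M F -> isat M G
  end.

Fixpoint reduct {A} (M : A -> Prop) (F : iform A) : iform A :=
  if excluded_middle_informative (isat M F) then
    match F with
    | IBot => IBot
    | IAtom a => IAtom a
    | IAnd Ix f => IAnd Ix (fun i => reduct M (f i))
    | IOr Ix f => IOr Ix (fun i => reduct M (f i))
    | IImp F G => IImp (reduct M F) (reduct M G)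
    end
  else IBot.

Definition stable_model {A} (Phi : iform A -> Prop) (M : A -> Prop) : Prop :=
  (forall F, Phi F -> isat M (reduct M F)) /\
  (forall J : A -> Prop, (forall a, J a -> M a) ->
     (forall F, Phi F -> isat J (reduct M F)) -> forall a, M a -> J a).

(** * The translation tau *)

Section Tau.
Variable P : PT.
Notation T := (pt P).

Definition patom := (nat * list T)%type.

Fixpoint ext (vs : list nat) (xs : list T) (th : nat -> T) : nat -> T :=
  match vs, xs with
  | v :: vs', x :: xs' => fun u => if Nat.eqb u v then x else ext vs' xs' th u
  | _, _ => th
  end.

Definition binval (o : binop) (i j : Z) (r : T) : Prop :=
  match o with
  | OAdd => r = num P (i + j)
  | OSub => r = num P (i - j)
  | OMul => r = num P (i * j)
  | ODiv => exists k, (k * Z.abs j <= Z.abs i < (k + 1) * Z.abs j)%Z /\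
             (((i * j >= 0)%Z /\ r = num P k) \/ ((i * j < 0)%Z /\ r = num P (- k)))
  | OMod => exists k, (k * Z.abs j <= Z.abs i < (k + 1) * Z.abs j)%Z /\
             (((i * j >= 0)%Z /\ r = num P (i - k * j)) \/
              ((i * j < 0)%Z /\ r = num P (i + k * j)))
  end.

Fixpoint tval (th : nat -> T) (t : pterm T) (r : T) : Prop :=
  match t with
  | PCst c => r = c
  | PVar v => r = th v
  | PAbs a => exists i, tval th a (num P i) /\ r = num P (Z.abs i)
  | PBin o a b => exists i j, tval th a (num P i) /\ tval th b (num P j) /\ binval o i j r
  | PIntv a b => exists i j k, tval th a (num P i) /\ tval th b (num P j) /\
                   (i <= k <= j)%Z /\ r = num P k
  end.

Definition relP (r : rel) (a b : T) : Prop :=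
  match r with
  | REq => a = b
  | RNeq => a <> b
  | RLt => ptlt P a b
  | RGt => ptlt P b a
  | RLe => ptlt P a b \/ a = b
  | RGe => ptlt P b a \/ a = b
  end.

Definition signed (s : sign) (F : iform patom) : iform patom :=
  match s with SPos => F | SNot => iNeg F | SNotNot => iNeg (iNeg F) end.

Definition tau_lit (th : nat -> T) (l : lit T) : iform patom :=
  match l with
  | LAtom s p ts =>
      IOr {rs : list T | Forall2 (tval th) ts rs} (fun rs => signed s (IAtom (p, proj1_sig rs)))
  | LCmp r t1 t2 =>
      if excluded_middle_informative
           (exists a b, tval th t1 a /\ tval th t2 b /\ relP r a b)
      then iTop else IBot
  end.

Definition tau_conj (th : nat -> T) (L : list (lit T)) : iform patom :=
  IAnd {l : lit T | In l L} (fun l => tau_lit th (proj1_sig l)).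

(** finite sets Delta of |X|-tuples of precomputed terms (duplicate-free lists) *)
Definition delta_ok (k : nat) (D : list (list T)) : Prop :=
  NoDup D /\ Forall (fun x => length x = k) D.

Definition tau_elem (th : nat -> T) (X W : list nat) (L : list (lit T)) (x : list T)
  : iform patom :=
  IOr {w : list T | length w = length W} (fun w => tau_conj (ext X x (ext W (proj1_sig w) th)) L).

Definition tau_belem (R : rule T) (th : nat -> T) (b : belem T) : iform patom :=
  match b with
  | BLit l => tau_lit th l
  | BCount AGe X L t =>
      let W := wvars R X L in
      IOr {c : T | tval th t c} (fun c =>
        IOr {D : list (list T) | delta_ok (length X) D /\
                                 (ptlt P (proj1_sig c) (num P (Z.of_nat (length D))) \/
                                  proj1_sig c = num P (Z.of_nat (length D)))}
            (fun D => IAnd {x : list T | In x (proj1_sig D)}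
                           (fun x => tau_elem th X W L (proj1_sig x))))
  | BCount ALe X L t =>
      let W := wvars R X L in
      IOr {c : T | tval th t c} (fun c =>
        IAnd {D : list (list T) | delta_ok (length X) D /\
                                  ptlt P (proj1_sig c) (num P (Z.of_nat (length D)))}
            (fun D => iNeg (IAnd {x : list T | In x (proj1_sig D)}
                                 (fun x => tau_elem th X W L (proj1_sig x)))))
  end.

Definition tau_rule (R : rule T) : iform patom :=
  IAnd {xs : list T | length xs = length (globals R)} (fun xs =>
    let th := ext (globals R) (proj1_sig xs) (fun _ => num P 0) in
    let B := IAnd {b : belem T | In b (rbody R)} (fun b => tau_belem R th (proj1_sig b)) in
    match rhead R with
    | HAtom p ts =>
        IImp B (IAnd {rs : list T | Forall2 (tval th) ts rs}
                     (fun rs => IAtom (p, proj1_sig rs)))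
    | HChoice p ts =>
        IImp B (IAnd {rs : list T | Forall2 (tval th) ts rs}
                     (fun rs => iOr2 (IAtom (p, proj1_sig rs)) (iNeg (IAtom (p, proj1_sig rs)))))
    | HEmpty => iNeg B
    end).

Definition tau_prog (Pi : program T) : iform patom :=
  IAnd {R : rule T | In R Pi} (fun R => tau_rule (proj1_sig R)).

Definition strongly_equivalent (Pi1 Pi2 : program T) : Prop :=
  forall (Phi : iform patom -> Prop) (M : patom -> Prop),
    stable_model (fun F => F = tau_prog Pi1 \/ Phi F) M <->
    stable_model (fun F => F = tau_prog Pi2 \/ Phi F) M.

End Tau.

(** * Two-sorted first-order formulas over sigma_0 / sigma_2 *)

Inductive sort : Type := SG | SI .
Definition var := (sort * nat)%type.
Definition var_eq_dec : forall x y : var, {x = y} + {x <> y}.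
Proof. decide equality; [apply Nat.eq_dec | decide equality]. Defined.
Definition var_eqb (x y : var) : bool := if var_eq_dec x y then true else false.

Inductive fterm (T : Type) : Type :=
| FVar (x : var)
| FCst (c : T)
| FAbs (t : fterm T)
| FAdd (t1 t2 : fterm T)
| FSub (t1 t2 : fterm T)
| FMul (t1 t2 : fterm T).
Arguments FVar {T} x.  Arguments FCst {T} c.  Arguments FAbs {T} t.
Arguments FAdd {T} t1 t2.  Arguments FSub {T} t1 t2.  Arguments FMul {T} t1 t2.

Inductive pred0 : Type := PSym (p : nat) (n : nat) | PNeq | PLt | PGt | PLe | PGe.

Inductive form (T Pr : Type) : Type :=
| FBot
| FPred (p : Pr) (args : list (fterm T))
| FEq (t1 t2 : fterm T)
| FAnd (A B : form T Pr)
| FOr (A B : form T Pr)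
| FImp (A B : form T Pr)
| FAll (x : var) (A : form T Pr)
| FEx (x : var) (A : form T Pr).
Arguments FBot {T Pr}.  Arguments FPred {T Pr} p args.  Arguments FEq {T Pr} t1 t2.
Arguments FAnd {T Pr} A B.  Arguments FOr {T Pr} A B.  Arguments FImp {T Pr} A B.
Arguments FAll {T Pr} x A.  Arguments FEx {T Pr} x A.

(** predicate constants of sigma_2: those of sigma_0, Atleast^{X;V}_F, Atmost^{X;V}_F,
    Start^{X;V}_F  (X, V lists of general variables, given by their indices) *)
Inductive pred2 (T : Type) : Type :=
| P0 (p : pred0)
| PAtleast (X V : list nat) (F : form T pred0)
| PAtmost (X V : list nat) (F : form T pred0)
| PStart (X V : list nat) (F : form T pred0).
Arguments P0 {T} p.  Arguments PAtleast {T} X V F.  Arguments PAtmost {T} X V F.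
Arguments PStart {T} X V F.

Definition FNot {T Pr} (A : form T Pr) : form T Pr := FImp A FBot.
Definition FIff {T Pr} (A B : form T Pr) : form T Pr := FAnd (FImp A B) (FImp B A).
Definition FTop {T Pr} : form T Pr := FImp FBot FBot.

Fixpoint bigAnd {T Pr} (l : list (form T Pr)) : form T Pr :=
  match l with [] => FTop | [A] => A | A :: l' => FAnd A (bigAnd l') end.
Fixpoint bigOr {T Pr} (l : list (form T Pr)) : form T Pr :=
  match l with [] => FBot | [A] => A | A :: l' => FOr A (bigOr l') end.
Definition alls {T Pr} (xs : list var) (A : form T Pr) : form T Pr := fold_right FAll A xs.
Definition exs {T Pr} (xs : list var) (A : form T Pr) : form T Pr := fold_right FEx A xs.

Definition gv (X : list nat) : list var := map (fun n => (SG, n)) X.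
Definition vts {T} (xs : list var) : list (fterm T) := map FVar xs.

Fixpoint ftvars {T} (t : fterm T) : list var :=
  match t with
  | FVar x => [x]
  | FCst _ => []
  | FAbs a => ftvars a
  | FAdd a b | FSub a b | FMul a b => ftvars a ++ ftvars b
  end.

Fixpoint fv {T Pr} (A : form T Pr) : list var :=
  match A with
  | FBot => []
  | FPred _ args => flat_map ftvars args
  | FEq a b => ftvars a ++ ftvars b
  | FAnd A B | FOr A B | FImp A B => fv A ++ fv B
  | FAll x A | FEx x A => filter (fun y => negb (var_eqb y x)) (fv A)
  end.

Definition free {T Pr} (x : var) (A : form T Pr) : Prop := In x (fv A).
Definition sentence {T Pr} (A : form T Pr) : Prop := fv A = [].

Definition closure {T Pr} (A : form T Pr) : form T Pr := alls (nodup var_eq_dec (fv A)) A.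

Fixpoint tsubst {T} (x : var) (s t : fterm T) : fterm T :=
  match t with
  | FVar y => if var_eqb y x then s else FVar y
  | FCst c => FCst c
  | FAbs a => FAbs (tsubst x s a)
  | FAdd a b => FAdd (tsubst x s a) (tsubst x s b)
  | FSub a b => FSub (tsubst x s a) (tsubst x s b)
  | FMul a b => FMul (tsubst x s a) (tsubst x s b)
  end.

Fixpoint subst {T Pr} (x : var) (s : fterm T) (A : form T Pr) : form T Pr :=
  match A with
  | FBot => FBot
  | FPred p args => FPred p (map (tsubst x s) args)
  | FEq a b => FEq (tsubst x s a) (tsubst x s b)
  | FAnd A B => FAnd (subst x s A) (subst x s B)
  | FOr A B => FOr (subst x s A) (subst x s B)
  | FImp A B => FImp (subst x s A) (subst x s B)
  | FAll y A => if var_eqb y x then FAll y A else FAll y (subst x s A)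
  | FEx y A => if var_eqb y x then FEx y A else FEx y (subst x s A)
  end.

Fixpoint free_for {T Pr} (x : var) (s : fterm T) (A : form T Pr) : Prop :=
  match A with
  | FBot | FPred _ _ | FEq _ _ => True
  | FAnd A B | FOr A B | FImp A B => free_for x s A /\ free_for x s B
  | FAll y A | FEx y A =>
      if var_eqb y x then True
      else ((~ free x A \/ ~ In y (ftvars s)) /\ free_for x s A)
  end.

Fixpoint emb {T} (A : form T pred0) : form T (pred2 T) :=
  match A with
  | FBot => FBot
  | FPred p args => FPred (P0 p) args
  | FEq a b => FEq a b
  | FAnd A B => FAnd (emb A) (emb B)
  | FOr A B => FOr (emb A) (emb B)
  | FImp A B => FImp (emb A) (emb B)
  | FAll x A => FAll x (emb A)
  | FEx x A => FEx x (emb A)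
  end.

Fixpoint wf_form {T Pr} (wt : fterm T -> Prop) (pw : Pr -> list (fterm T) -> Prop)
  (A : form T Pr) : Prop :=
  match A with
  | FBot => True
  | FPred p args => pw p args
  | FEq a b => wt a /\ wt b
  | FAnd A B | FOr A B | FImp A B => wf_form wt pw A /\ wf_form wt pw B
  | FAll _ A | FEx _ A => wf_form wt pw A
  end.

Fixpoint no_psym {T} (A : form T pred0) : Prop :=
  match A with
  | FBot | FEq _ _ => True
  | FPred (PSym _ _) _ => False
  | FPred _ _ => True
  | FAnd A B | FOr A B | FImp A B => no_psym A /\ no_psym B
  | FAll _ A | FEx _ A => no_psym A
  end.

Section FO.
Variable P : PT.
Notation T := (pt P).
Notation form0 := (form T pred0).
Notation form2 := (form T (pred2 T)).

Fixpoint int_term (t : fterm T) : Prop :=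
  match t with
  | FVar (SI, _) => True
  | FVar (SG, _) => False
  | FCst c => exists n, c = num P n
  | FAbs a => int_term a
  | FAdd a b | FSub a b | FMul a b => int_term a /\ int_term b
  end.

Definition wf_term (t : fterm T) : Prop :=
  match t with
  | FVar _ | FCst _ => True
  | FAbs a => int_term a
  | FAdd a b | FSub a b | FMul a b => int_term a /\ int_term b
  end.

Definition sort_ok (x : var) (t : fterm T) : Prop :=
  match fst x with SI => int_term t | SG => wf_term t end.

Definition wf_pred0 (p : pred0) (args : list (fterm T)) : Prop :=
  Forall wf_term args /\
  match p with PSym _ n => length args = n | _ => length args = 2 end.

Definition wf0 (A : form0) : Prop := wf_form wf_term wf_pred0 A.

Definition sig_ok (X V : list nat) (F : form0) : Prop :=
  NoDup (X ++ V) /\ wf0 F /\ (forall y, free y F -> In y (gv (X ++ V))).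

Definition wf_pred2 (p : pred2 T) (args : list (fterm T)) : Prop :=
  match p with
  | P0 q => wf_pred0 q args
  | PAtleast X V F | PAtmost X V F =>
      sig_ok X V F /\ Forall wf_term args /\ length args = length V + 1
  | PStart X V F =>
      sig_ok X V F /\ Forall wf_term args /\ length args = length X + length V + 1 /\
      exists a t, args = a ++ [t] /\ int_term t
  end.

Definition wf2 (A : form2) : Prop := wf_form wf_term wf_pred2 A.

Definition upd (rho : var -> T) (x : var) (r : T) : var -> T :=
  fun y => if var_eqb y x then r else rho y.

Fixpoint tev (rho : var -> T) (t : fterm T) (r : T) : Prop :=
  match t with
  | FVar x => r = rho x
  | FCst c => r = c
  | FAbs a => exists i, tev rho a (num P i) /\ r = num P (Z.abs i)
  | FAdd a b => exists i j, tev rho a (num P i) /\ tev rho b (num P j) /\ r = num P (i + j)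
  | FSub a b => exists i j, tev rho a (num P i) /\ tev rho b (num P j) /\ r = num P (i - j)
  | FMul a b => exists i j, tev rho a (num P i) /\ tev rho b (num P j) /\ r = num P (i * j)
  end.

Definition pinterp (p : pred0) (rs : list T) : Prop :=
  match p, rs with
  | PNeq, [a; b] => a <> b
  | PLt, [a; b] => ptlt P a b
  | PGt, [a; b] => ptlt P b a
  | PLe, [a; b] => ptlt P a b \/ a = b
  | PGe, [a; b] => ptlt P b a \/ a = b
  | _, _ => False
  end.

Fixpoint ssat (rho : var -> T) (A : form0) : Prop :=
  match A with
  | FBot => False
  | FPred p args => exists rs, Forall2 (tev rho) args rs /\ pinterp p rs
  | FEq a b => exists r, tev rho a r /\ tev rho b r
  | FAnd A B => ssat rho A /\ ssat rho B
  | FOr A B => ssat rho A \/ ssat rho B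
  | FImp A B => ssat rho A -> ssat rho B
  | FAll x A => match fst x with
                | SG => forall r, ssat (upd rho x r) A
                | SI => forall n, ssat (upd rho x (num P n)) A
                end
  | FEx x A => match fst x with
               | SG => exists r, ssat (upd rho x r) A
               | SI => exists n, ssat (upd rho x (num P n)) A
               end
  end.

Definition Std (A : form2) : Prop :=
  exists B : form0, A = emb B /\ wf0 B /\ sentence B /\ no_psym B /\
    forall rho, ssat rho B.

Definition ncst (n : Z) : fterm T := FCst (num P n).
Definition cmp2 (p : pred0) (a b : fterm T) : form2 := FPred (P0 p) [a; b].

Definition Ind (A : form2) : Prop :=
  exists (F : form2) (n : nat),
    let N := FVar (SI, n) in
    wf2 F /\
    A = closure
          (FImp (FAnd (subst (SI, n) (ncst 0) F)
                      (FAll (SI, n) (FImp (FAnd (cmp2 PGe N (ncst 0)) F)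
                                          (subst (SI, n) (FAdd N (ncst 1)) F))))
                (FAll (SI, n) (FImp (cmp2 PGe N (ncst 0)) F))).

Definition start_atom (X V : list nat) (F : form0) (xs : list nat) (t : fterm T) : form2 :=
  FPred (PStart X V F) (vts (gv xs) ++ vts (gv V) ++ [t]).

Fixpoint lex_disj (xs us : list nat) (eqs : list form2) : list form2 :=
  match xs, us with
  | x :: xs', u :: us' =>
      FAnd (cmp2 PLt (FVar (SG, x)) (FVar (SG, u))) (bigAnd eqs)
        :: lex_disj xs' us' (eqs ++ [FEq (FVar (SG, x)) (FVar (SG, u))])
  | _, _ => []
  end.
Definition lexlt (xs us : list nat) : form2 := bigOr (lex_disj xs us []).

Definition D0 (A : form2) : Prop :=
  exists (X V : list nat) (F : form0) (U : list nat) (n : nat),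
    let N := FVar (SI, n) in
    sig_ok X V F /\ NoDup U /\ length U = length X /\
    (forall u, In u U -> ~ In u (X ++ V)) /\
    (A = alls (gv X ++ gv V ++ [(SI, n)])
              (FImp (cmp2 PLe N (ncst 0)) (start_atom X V F X N))
     \/ A = alls (gv X ++ gv V) (FIff (start_atom X V F X (ncst 1)) (emb F))
     \/ A = alls (gv X ++ gv V ++ [(SI, n)])
              (FImp (cmp2 PGt N (ncst 0))
                 (FIff (start_atom X V F X (FAdd N (ncst 1)))
                       (FAnd (emb F) (exs (gv U) (FAnd (lexlt X U) (start_atom X V F U N))))))).

Definition D1 (A : form2) : Prop :=
  exists (X V : list nat) (F : form0) (y n : nat),
    let N := FVar (SI, n) in
    let Y := FVar (SG, y) in
    sig_ok X V F /\ ~ In y (X ++ V) /\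
    (A = alls (gv V ++ [(SG, y)])
              (FIff (FPred (PAtleast X V F) (vts (gv V) ++ [Y]))
                    (exs (gv X ++ [(SI, n)]) (FAnd (start_atom X V F X N) (cmp2 PGe N Y))))
     \/ A = alls (gv V ++ [(SG, y)])
              (FIff (FPred (PAtmost X V F) (vts (gv V) ++ [Y]))
                    (alls (gv X ++ [(SI, n)]) (FImp (start_atom X V F X N) (cmp2 PLe N Y))))).

Definition HT_axioms (A : form2) : Prop :=
  (exists F G, wf2 F /\ wf2 G /\ A = FOr F (FOr (FImp F G) (FNot G))) \/
  (exists x F, wf2 F /\ A = FEx x (FImp F (FAll x F))) \/
  Std A \/ Ind A \/ D0 A \/ D1 A.

Inductive Prov (Ax : form2 -> Prop) : form2 -> Prop :=
| H_ax A : wf2 A -> Ax A -> Prov Ax A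
| H_K A B : wf2 A -> wf2 B -> Prov Ax (FImp A (FImp B A))
| H_S A B C : wf2 A -> wf2 B -> wf2 C ->
    Prov Ax (FImp (FImp A (FImp B C)) (FImp (FImp A B) (FImp A C)))
| H_andE1 A B : wf2 A -> wf2 B -> Prov Ax (FImp (FAnd A B) A)
| H_andE2 A B : wf2 A -> wf2 B -> Prov Ax (FImp (FAnd A B) B)
| H_andI A B : wf2 A -> wf2 B -> Prov Ax (FImp A (FImp B (FAnd A B)))
| H_orI1 A B : wf2 A -> wf2 B -> Prov Ax (FImp A (FOr A B))
| H_orI2 A B : wf2 A -> wf2 B -> Prov Ax (FImp B (FOr A B))
| H_orE A B C : wf2 A -> wf2 B -> wf2 C ->
    Prov Ax (FImp (FImp A C) (FImp (FImp B C) (FImp (FOr A B) C)))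
| H_bot A : wf2 A -> Prov Ax (FImp FBot A)
| H_allE x A t : wf2 A -> sort_ok x t -> free_for x t A ->
    Prov Ax (FImp (FAll x A) (subst x t A))
| H_exI x A t : wf2 A -> sort_ok x t -> free_for x t A ->
    Prov Ax (FImp (subst x t A) (FEx x A))
| H_refl t : wf_term t -> Prov Ax (FEq t t)
| H_eq x A s t : wf2 A -> sort_ok x s -> sort_ok x t -> free_for x s A -> free_for x t A ->
    Prov Ax (FImp (FEq s t) (FImp (subst x s A) (subst x t A)))
| H_mp A B : Prov Ax A -> Prov Ax (FImp A B) -> Prov Ax B
| H_allI x A B : Prov Ax (FImp B A) -> ~ free x B -> Prov Ax (FImp B (FAll x A))
| H_exE x A B : Prov Ax (FImp A B) -> ~ free x B -> Prov Ax (FImp (FEx x A) B).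

Definition HT_provable (A : form2) : Prop := Prov HT_axioms A.

(** fresh-variable state: next unused general index, next unused integer index *)
Definition st := (nat * nat)%type.

Definition op2 (o : binop) (a b : fterm T) : fterm T :=
  match o with OAdd => FAdd a b | OSub => FSub a b | _ => FMul a b end.

Fixpoint val (t : pterm T) (z : var) (s : st) : form0 * st :=
  match t with
  | PCst c => (FEq (FVar z) (FCst c), s)
  | PVar v => (FEq (FVar z) (FVar (SG, v)), s)
  | PAbs a =>
      let i := (SI, snd s) in
      let '(F1, s1) := val a i (fst s, S (snd s)) in
      (FEx i (FAnd F1 (FEq (FVar z) (FAbs (FVar i)))), s1)
  | PBin o a b =>
      let i := (SI, snd s) in let j := (SI, S (snd s)) in let k := (SI, S (S (snd s))) in
      let I := FVar i in let J := FVar j in let K := FVar k in let Zt := FVar z in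
      let '(F1, s1) := val a i (fst s, 3 + snd s) in
      let '(F2, s2) := val b j s1 in
      let divc := FAnd (FPred (PLe) [FMul K (FAbs J); FAbs I])
                       (FPred (PLt) [FAbs I; FMul (FAdd K (FCst (num P 1))) (FAbs J)]) in
      let pos := FPred PGe [FMul I J; FCst (num P 0)] in
      let neg := FPred PLt [FMul I J; FCst (num P 0)] in
      (match o with
       | ODiv =>
           exs [i; j; k] (FAnd F1 (FAnd F2 (FAnd divc
             (FOr (FAnd pos (FEq Zt K)) (FAnd neg (FEq Zt (FSub (FCst (num P 0)) K)))))))
       | OMod =>
           exs [i; j; k] (FAnd F1 (FAnd F2 (FAnd divc
             (FOr (FAnd pos (FEq Zt (FSub I (FMul K J))))
                  (FAnd neg (FEq Zt (FAdd I (FMul K J))))))))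
       | _ => exs [i; j] (FAnd F1 (FAnd F2 (FEq Zt (op2 o I J))))
       end, s2)
  | PIntv a b =>
      let i := (SI, snd s) in let j := (SI, S (snd s)) in let k := (SI, S (S (snd s))) in
      let '(F1, s1) := val a i (fst s, 3 + snd s) in
      let '(F2, s2) := val b j s1 in
      (exs [i; j; k] (FAnd F1 (FAnd F2 (FAnd
          (FAnd (FPred PLe [FVar i; FVar k]) (FPred PLe [FVar k; FVar j]))
          (FEq (FVar z) (FVar k))))), s2)
  end.

Fixpoint val_list (ts : list (pterm T)) (zs : list var) (s : st) : list form0 * st :=
  match ts, zs with
  | t :: ts', z :: zs' =>
      let '(F, s1) := val t z s in
      let '(Fs, s2) := val_list ts' zs' s1 in (F :: Fs, s2)
  | _, _ => ([], s)
  end.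

Fixpoint fresh_gens (n : nat) (s : st) : list var * st :=
  match n with
  | O => ([], s)
  | S n' => let '(zs, s1) := fresh_gens n' (S (fst s), snd s) in ((SG, fst s) :: zs, s1)
  end.

Definition cmp_form (r : rel) (a b : fterm T) : form0 :=
  match r with
  | REq => FEq a b
  | RNeq => FPred PNeq [a; b]
  | RLt => FPred PLt [a; b]
  | RGt => FPred PGt [a; b]
  | RLe => FPred PLe [a; b]
  | RGe => FPred PGe [a; b]
  end.

Definition signedF {Pr} (sg : sign) (A : form T Pr) : form T Pr :=
  match sg with SPos => A | SNot => FNot A | SNotNot => FNot (FNot A) end.

Definition tauB_lit (l : lit T) (s : st) : form0 * st :=
  match l with
  | LAtom sg p ts =>
      let '(zs, s1) := fresh_gens (length ts) s in
      let '(Fs, s2) := val_list ts zs s1 in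
      (exs zs (FAnd (bigAnd Fs) (signedF sg (FPred (PSym p (length ts)) (vts zs)))), s2)
  | LCmp r a b =>
      let z1 := (SG, fst s) in let z2 := (SG, S (fst s)) in
      let '(F1, s1) := val a z1 (2 + fst s, snd s) in
      let '(F2, s2) := val b z2 s1 in
      (exs [z1; z2] (FAnd F1 (FAnd F2 (cmp_form r (FVar z1) (FVar z2)))), s2)
  end.

Fixpoint tauB_list (L : list (lit T)) (s : st) : list form0 * st :=
  match L with
  | [] => ([], s)
  | l :: L' => let '(F, s1) := tauB_lit l s in
               let '(Fs, s2) := tauB_list L' s1 in (F :: Fs, s2)
  end.

Definition star (R : rule T) (b : belem T) (s : st) : form2 * st :=
  match b with
  | BLit l => let '(F, s1) := tauB_lit l s in (emb F, s1)
  | BCount o X L t =>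
      let c := (SG, fst s) in
      let '(Ft, s1) := val t c (S (fst s), snd s) in
      let '(FL, s2) := tauB_list L s1 in
      let V := vvars R L in
      let W := wvars R X L in
      let F := exs (gv W) (bigAnd FL) in
      let pr := match o with AGe => PAtleast X V F | ALe => PAtmost X V F end in
      (FEx c (FAnd (emb Ft) (FPred pr (vts (gv V) ++ [FVar c]))), s2)
  end.

Fixpoint star_list (R : rule T) (bs : list (belem T)) (s : st) : list form2 * st :=
  match bs with
  | [] => ([], s)
  | b :: bs' => let '(F, s1) := star R b s in
                let '(Fs, s2) := star_list R bs' s1 in (F :: Fs, s2)
  end.

Definition tau_star_rule (R : rule T) (s : st) : form2 * st :=
  let '(Bs, s1) := star_list R (rbody R) s in
  match rhead R with
  | HAtom p ts =>
      let '(zs, s2) := fresh_gens (length ts) s1 in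
      let '(Fs, s3) := val_list ts zs s2 in
      (closure (FImp (bigAnd (Bs ++ [emb (bigAnd Fs)]))
                     (FPred (P0 (PSym p (length ts))) (vts zs))), s3)
  | HChoice p ts =>
      let '(zs, s2) := fresh_gens (length ts) s1 in
      let '(Fs, s3) := val_list ts zs s2 in
      let a := FPred (P0 (PSym p (length ts))) (vts zs) in
      (closure (FImp (bigAnd (Bs ++ [emb (bigAnd Fs)])) (FOr a (FNot a))), s3)
  | HEmpty => (closure (FNot (bigAnd Bs)), s1)
  end.

Fixpoint tau_star_rules (Pi : program T) (s : st) : list form2 :=
  match Pi with
  | [] => []
  | R :: Pi' => let '(F, s1) := tau_star_rule R s in F :: tau_star_rules Pi' s1
  end.

Definition belem_allvars (b : belem T) : list nat :=
  match b with
  | BLit l => lvars l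
  | BCount _ X L t => X ++ Lvars L ++ tvars t
  end.
Definition prog_vars (Pi : program T) : list nat :=
  flat_map (fun R => head_vars (rhead R) ++ flat_map belem_allvars (rbody R)) Pi.

(** tau* Pi; fresh general variables are chosen above all program variables *)
Definition tau_star (Pi : program T) : form2 :=
  bigAnd (tau_star_rules Pi (S (list_max (prog_vars Pi)), 0)).

End FO.

(** The translation [tau*] is faithful for the logic of here-and-there: every
    pair of HT-interpretations [H ⊆ T] of the precomputed atoms extends to a
    two-world Kripke model of the two-sorted language in which the predicates
    [Start], [Atleast] and [Atmost] get their intended meaning ([Start] holds of a tuple
    that is the least element of a lexicographically increasing chain of [N]
    solutions of [F]).  All axioms of
    [HT_#] hold in this model, so a provable equivalence [tau* Pi1 <-> tau* Pi2]
    holds in it; and [tau* Pi] holds in it exactly when the infinitary formula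
    [tau Pi] is HT-satisfied by [(H, T)].  Hence [tau Pi1] and [tau Pi2] have the
    same HT-models, and such formulas are strongly equivalent because the
    Truszczynski reduct [F^M] is satisfied by [J ⊆ M] iff [(J, M)] HT-satisfies [F]. *)
From Stdlib Require Import ZArith List Lia Classical ClassicalEpsilon.
Import ListNotations.

Section Kripke.
Variable P : PT.
Notation T := (pt P).

(** Worlds of the here-and-there frame: [true] is "here", [false] is "there". *)
Definition accessible (w' w : bool) : Prop := w' = w \/ w' = false.

Fixpoint hsat {Pr} (pi : bool -> Pr -> list T -> Prop) (w : bool) (rho : var -> T)
  (A : form T Pr) {struct A} : Prop :=
  match A with
  | FBot => False
  | FPred p args => exists rs, Forall2 (tev P rho) args rs /\ pi w p rs
  | FEq a b => exists r, tev P rho a r /\ tev P rho b r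
  | FAnd A B => hsat pi w rho A /\ hsat pi w rho B
  | FOr A B => hsat pi w rho A \/ hsat pi w rho B
  | FImp A B => forall w', accessible w' w -> hsat pi w' rho A -> hsat pi w' rho B
  | FAll x A => match fst x with
                | SG => forall r, hsat pi w (upd P rho x r) A
                | SI => forall n, hsat pi w (upd P rho x (num P n)) A
                end
  | FEx x A => match fst x with
               | SG => exists r, hsat pi w (upd P rho x r) A
               | SI => exists n, hsat pi w (upd P rho x (num P n)) A
               end
  end.

Definition int_sorted (rho : var -> T) := forall n, exists k, rho (SI, n) = num P k.

Definition sort_fits (x : var) (r : T) : Prop := fst x = SI -> exists n, r = num P n.

Lemma accessible_refl w : accessible w w.
Proof. now left. Qed.

Lemma accessible_there w : accessible false w.
Proof. now right. Qed.

Lemma accessible_trans a b c : accessible a b -> accessible b c -> accessible a c.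
Proof. unfold accessible; intuition congruence. Qed.

Lemma accessible_from_there w : accessible w false -> w = false.
Proof. now intros [|]. Qed.

Lemma var_eqb_refl x : var_eqb x x = true.
Proof. unfold var_eqb; destruct (var_eq_dec x x); congruence. Qed.

Lemma var_eqb_neq x y : x <> y -> var_eqb x y = false.
Proof. unfold var_eqb; destruct (var_eq_dec x y); congruence. Qed.

Lemma var_eqb_true x y : var_eqb x y = true -> x = y.
Proof. unfold var_eqb; destruct (var_eq_dec x y); congruence. Qed.

Lemma upd_eq rho x r : upd P rho x r x = r.
Proof. unfold upd; now rewrite var_eqb_refl. Qed.

Lemma upd_neq rho x r y : y <> x -> upd P rho x r y = rho y.
Proof. intros; unfold upd; now rewrite var_eqb_neq. Qed.

Lemma upd_comm rho x y a b : x <> y ->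
  forall z, upd P (upd P rho x a) y b z = upd P (upd P rho y b) x a z.
Proof.
  intros Hxy z; unfold upd.
  destruct (var_eqb z y) eqn:E1, (var_eqb z x) eqn:E2; auto.
  apply var_eqb_true in E1; apply var_eqb_true in E2; subst; tauto.
Qed.

Lemma int_sorted_upd rho x r : int_sorted rho -> sort_fits x r -> int_sorted (upd P rho x r).
Proof.
  intros H Hx n. unfold upd. destruct (var_eqb (SI, n) x) eqn:E; auto.
  apply var_eqb_true in E; subst; apply Hx; auto.
Qed.

Lemma sort_fits_zero x : sort_fits x (num P 0).
Proof. intros _; eauto. Qed.

Lemma tev_functional rho t r1 r2 : tev P rho t r1 -> tev P rho t r2 -> r1 = r2.
Proof.
  revert r1 r2; induction t; simpl; intros r1 r2 H1 H2; try congruence.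
  - destruct H1 as [i [Hi ->]]; destruct H2 as [j [Hj ->]].
    pose proof (IHt _ _ Hi Hj) as E; apply num_inj in E; now subst.
  - destruct H1 as [i [j [Hi [Hj ->]]]]; destruct H2 as [i' [j' [Hi' [Hj' ->]]]].
    pose proof (IHt1 _ _ Hi Hi') as E1; pose proof (IHt2 _ _ Hj Hj') as E2.
    apply num_inj in E1, E2; now subst.
  - destruct H1 as [i [j [Hi [Hj ->]]]]; destruct H2 as [i' [j' [Hi' [Hj' ->]]]].
    pose proof (IHt1 _ _ Hi Hi') as E1; pose proof (IHt2 _ _ Hj Hj') as E2.
    apply num_inj in E1, E2; now subst.
  - destruct H1 as [i [j [Hi [Hj ->]]]]; destruct H2 as [i' [j' [Hi' [Hj' ->]]]].
    pose proof (IHt1 _ _ Hi Hi') as E1; pose proof (IHt2 _ _ Hj Hj') as E2.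
    apply num_inj in E1, E2; now subst.
Qed.

Lemma tev_unique rho t v : tev P rho t v -> forall r, tev P rho t r <-> r = v.
Proof. intros H r; split; [intros H'; eapply tev_functional; eauto | intros ->; auto]. Qed.

Lemma tev_ext rho1 rho2 t :
  (forall y, In y (ftvars t) -> rho1 y = rho2 y) ->
  forall r, tev P rho1 t r <-> tev P rho2 t r.
Proof.
  induction t; simpl; intros H r.
  4-6: assert (H1 : forall y, In y (ftvars t1) -> rho1 y = rho2 y)
         by (intros; apply H, in_or_app; auto);
       assert (H2 : forall y, In y (ftvars t2) -> rho1 y = rho2 y)
         by (intros; apply H, in_or_app; auto);
       split; intros [i [j [Hi [Hj E]]]]; exists i, j;
       repeat split; auto; first [apply (IHt1 H1) | apply (IHt2 H2)]; auto.
  - rewrite H; auto; tauto.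
  - tauto.
  - split; intros [i [Hi E]]; exists i; split; auto; apply (IHt H); auto.
Qed.

Lemma Forall2_tev_ext rho1 rho2 args :
  (forall y, In y (flat_map ftvars args) -> rho1 y = rho2 y) ->
  forall rs, Forall2 (tev P rho1) args rs <-> Forall2 (tev P rho2) args rs.
Proof.
  induction args as [|a args IH]; simpl; intros H rs.
  - split; intros HF; inversion HF; constructor.
  - assert (Ha : forall y, In y (ftvars a) -> rho1 y = rho2 y)
      by (intros; apply H, in_or_app; auto).
    assert (Hs : forall y, In y (flat_map ftvars args) -> rho1 y = rho2 y)
      by (intros; apply H, in_or_app; auto).
    split; intros HF; inversion HF; subst; constructor;
      first [apply (tev_ext _ _ _ Ha) | apply (IH Hs)]; auto.
Qed.

Section Formulas.
Context {Pr : Type} (pi : bool -> Pr -> list T -> Prop).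

Lemma hsat_all w rho x (A : form T Pr) :
  hsat pi w rho (FAll x A) <-> forall r, sort_fits x r -> hsat pi w (upd P rho x r) A.
Proof.
  unfold sort_fits; simpl; destruct (fst x); split; intros Hq.
  - intros r _; auto.
  - intros r; apply Hq; discriminate.
  - intros r [n ->]; auto.
  - intros n; apply Hq; eauto.
Qed.

Lemma hsat_ex w rho x (A : form T Pr) :
  hsat pi w rho (FEx x A) <-> exists r, sort_fits x r /\ hsat pi w (upd P rho x r) A.
Proof.
  unfold sort_fits; simpl; destruct (fst x); split.
  - intros [r Hr]; exists r; split; auto; discriminate.
  - intros [r [_ Hr]]; eauto.
  - intros [n Hr]; exists (num P n); split; eauto.
  - intros [r [Hd Hr]]; destruct (Hd eq_refl) as [n ->]; eauto.
Qed.

Lemma hsat_iff w rho (A B : form T Pr) :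
  hsat pi w rho (FIff A B) <-> forall w', accessible w' w -> (hsat pi w' rho A <-> hsat pi w' rho B).
Proof.
  simpl; split.
  - intros [H1 H2] w' Ha; split; auto.
  - intros H; split; intros w' Ha; apply H; auto.
Qed.

Lemma hsat_ext (A : form T Pr) :
  forall w rho1 rho2, (forall y, In y (fv A) -> rho1 y = rho2 y) ->
  hsat pi w rho1 A <-> hsat pi w rho2 A.
Proof.
  induction A; simpl; intros w rho1 rho2 H.
  - tauto.
  - split; intros [rs [H1 H2]]; exists rs; split; auto;
      apply (Forall2_tev_ext rho1 rho2); auto.
  - split; intros [r [H1 H2]]; exists r; split;
      try (apply (tev_ext rho1 rho2); [intros; apply H, in_or_app; auto|]; auto).
  - rewrite (IHA1 w rho1 rho2), (IHA2 w rho1 rho2); [tauto| |];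
      intros; apply H, in_or_app; auto.
  - rewrite (IHA1 w rho1 rho2), (IHA2 w rho1 rho2); [tauto| |];
      intros; apply H, in_or_app; auto.
  - split; intros Hi w' Ha.
    + rewrite <- (IHA1 w' rho1 rho2), <- (IHA2 w' rho1 rho2); auto;
        intros; apply H, in_or_app; auto.
    + rewrite (IHA1 w' rho1 rho2), (IHA2 w' rho1 rho2); auto;
        intros; apply H, in_or_app; auto.
  - assert (E : forall r y, In y (fv A) -> upd P rho1 x r y = upd P rho2 x r y).
    { intros r y Hy. unfold upd. destruct (var_eqb y x) eqn:E; auto.
      apply H. apply filter_In; rewrite E; auto. }
    destruct (fst x); split; intros Hq r;
      first [rewrite <- (IHA w _ _ (E _)) | rewrite (IHA w _ _ (E _))]; auto.
  - assert (E : forall r y, In y (fv A) -> upd P rho1 x r y = upd P rho2 x r y).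
    { intros r y Hy. unfold upd. destruct (var_eqb y x) eqn:E; auto.
      apply H. apply filter_In; rewrite E; auto. }
    destruct (fst x); split; intros [r Hq]; exists r;
      first [rewrite <- (IHA w _ _ (E _)) | rewrite (IHA w _ _ (E _))]; auto.
Qed.

Lemma hsat_upd_notfree w rho x r (A : form T Pr) :
  ~ free x A -> hsat pi w (upd P rho x r) A <-> hsat pi w rho A.
Proof.
  intros Hx. apply hsat_ext. intros y Hy. apply upd_neq. intros ->. contradiction.
Qed.

Lemma hsat_upd_upd w rho x a b (A : form T Pr) :
  hsat pi w (upd P (upd P rho x a) x b) A <-> hsat pi w (upd P rho x b) A.
Proof. apply hsat_ext; intros y _; unfold upd; destruct (var_eqb y x); auto. Qed.

Lemma hsat_persist (Hpi : forall p rs, pi true p rs -> pi false p rs) (A : form T Pr) :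
  forall w w' rho, accessible w' w -> hsat pi w rho A -> hsat pi w' rho A.
Proof.
  induction A; simpl; intros w w' rho Ha H; auto.
  - destruct H as [rs [H1 H2]]; exists rs; split; auto.
    destruct Ha as [-> | ->]; auto. destruct w; auto.
  - destruct H; split; eauto.
  - destruct H; [left | right]; eauto.
  - intros w'' Ha'; apply H. eapply accessible_trans; eauto.
  - destruct (fst x); intros r; eauto.
  - destruct (fst x); destruct H as [r Hr]; exists r; eauto.
Qed.

Lemma tsubst_notin x (t u : fterm T) : ~ In x (ftvars u) -> tsubst x t u = u.
Proof.
  induction u; simpl; intros H; auto.
  3-5: rewrite IHu1, IHu2; auto; intro; apply H, in_or_app; auto.
  - destruct (var_eqb x0 x) eqn:E; auto. apply var_eqb_true in E; subst; tauto.
  - rewrite IHu; auto.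
Qed.

Lemma subst_notfree x (t : fterm T) (A : form T Pr) : ~ free x A -> subst x t A = A.
Proof.
  unfold free; induction A; simpl; intros H; auto.
  3-5: rewrite IHA1, IHA2; auto; intro; apply H, in_or_app; auto.
  3-4: destruct (var_eqb x0 x) eqn:E; auto; rewrite IHA; auto;
       intro Hx; apply H; apply filter_In; split; auto;
       rewrite var_eqb_neq; auto; intro; subst; rewrite var_eqb_refl in E; discriminate.
  - f_equal. induction args; simpl in *; auto.
    rewrite tsubst_notin, IHargs; auto; intro; apply H, in_or_app; auto.
  - rewrite !tsubst_notin; auto; intro; apply H, in_or_app; auto.
Qed.

Lemma tev_tsubst rho x t v (u : fterm T) :
  (forall r, tev P rho t r <-> r = v) ->
  forall r, tev P rho (tsubst x t u) r <-> tev P (upd P rho x v) u r.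
Proof.
  intros Ht; induction u; simpl; intros r.
  4-6: split; intros [i [j [Hi [Hj E]]]]; exists i, j; repeat split; auto;
       first [apply IHu1 | apply IHu2]; auto.
  - unfold upd; destruct (var_eqb x0 x); simpl; auto. tauto.
  - tauto.
  - split; intros [i [Hi E]]; exists i; split; auto; apply IHu; auto.
Qed.

Lemma Forall2_tev_tsubst rho x t v args :
  (forall r, tev P rho t r <-> r = v) ->
  forall rs, Forall2 (tev P rho) (map (tsubst x t) args) rs <->
             Forall2 (tev P (upd P rho x v)) args rs.
Proof.
  intros Ht; induction args; simpl; intros rs; split; intros HF; inversion HF; subst;
    constructor; first [apply IHargs | apply (tev_tsubst rho x t v)]; auto.
Qed.

Lemma hsat_subst x t (A : form T Pr) :
  forall w rho v, (forall r, tev P rho t r <-> r = v) -> free_for x t A ->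
  hsat pi w rho (subst x t A) <-> hsat pi w (upd P rho x v) A.
Proof.
  induction A; simpl; intros w rho v Ht Hff.
  7-8: destruct (var_eqb x0 x) eqn:E;
    [ apply var_eqb_true in E; subst x0;
      apply (hsat_ext (FAll x A) w) || apply (hsat_ext (FEx x A) w);
      simpl; intros y Hy; apply filter_In in Hy; destruct Hy as [_ Hy];
      rewrite upd_neq; auto; intro; subst; rewrite var_eqb_refl in Hy; discriminate
    | assert (Hne : x0 <> x) by (intro; subst; rewrite var_eqb_refl in E; discriminate);
      assert (K : forall r, hsat pi w (upd P rho x0 r) (subst x t A) <->
                            hsat pi w (upd P (upd P rho x v) x0 r) A);
      [ intros r; destruct Hff as [[Hnf | Hnin] Hff];
        [ rewrite subst_notfree by auto; apply hsat_ext; intros y Hy; unfold upd;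
          destruct (var_eqb y x0) eqn:E1; destruct (var_eqb y x) eqn:E2; auto;
          apply var_eqb_true in E2; subst; tauto
        | rewrite IHA; auto;
          [ apply hsat_ext; intros y _; apply upd_comm; auto
          | intros r'; rewrite (tev_ext _ rho); auto;
            intros y Hy; apply upd_neq; intro; subst; tauto ] ]
      | simpl; destruct (fst x0); split;
        first [intros Hq r; apply K, Hq | intros [r Hq]; exists r; apply K, Hq] ] ].
  4-5: destruct Hff as [Hf1 Hf2];
       rewrite (IHA1 w rho v Ht Hf1), (IHA2 w rho v Ht Hf2); tauto.
  - tauto.
  - split; intros [rs [H1 H2]]; exists rs; split; auto;
      apply (Forall2_tev_tsubst rho x t v); auto.
  - split; intros [r [H1 H2]]; exists r; split; apply (tev_tsubst rho x t v); auto.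
  - destruct Hff as [Hf1 Hf2]; split; intros Hi w' Ha Hx;
      apply (IHA2 w' rho v Ht Hf2); apply Hi; auto; apply (IHA1 w' rho v Ht Hf1); auto.
Qed.

Lemma free_for_closed x (t : fterm T) (A : form T Pr) :
  (forall y, In y (ftvars t) -> y = x) -> free_for x t A.
Proof.
  intros Ht; induction A; simpl; auto.
  all: destruct (var_eqb x0 x) eqn:E; auto; split; auto; right; intro Hy;
       apply Ht in Hy; subst; rewrite var_eqb_refl in E; discriminate.
Qed.

End Formulas.

Fixpoint upd_list (rho : var -> T) (xs : list var) (vals : list T) : var -> T :=
  match xs, vals with
  | x :: xs', a :: vals' => upd_list (upd P rho x a) xs' vals'
  | _, _ => rho
  end.

Lemma upd_list_notin rho xs vals y : ~ In y xs -> upd_list rho xs vals y = rho y.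
Proof.
  revert rho vals; induction xs; intros rho vals H; destruct vals; simpl; auto.
  rewrite IHxs; [|intro; apply H; simpl; auto].
  apply upd_neq. intro; subst; apply H; simpl; auto.
Qed.

Lemma upd_list_map_in rho rho' ys y : In y ys -> upd_list rho ys (map rho' ys) y = rho' y.
Proof.
  revert rho; induction ys; simpl; intros rho H; [tauto|].
  destruct (classic (In y ys)) as [Hi|Hn]; auto.
  destruct H as [->|H]; [|tauto]. rewrite upd_list_notin; auto. apply upd_eq.
Qed.

Lemma map_upd_list rho ys vals : NoDup ys -> length ys = length vals ->
  map (upd_list rho ys vals) ys = vals.
Proof.
  revert rho vals; induction ys; intros rho vals Hn Hl; destruct vals;
    simpl in *; try discriminate; auto.
  inversion Hn; subst. f_equal.
  - rewrite upd_list_notin; auto. apply upd_eq.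
  - apply IHys; auto.
Qed.

Lemma map_upd_list_notin rho ys vals zs : (forall z, In z zs -> ~ In z ys) ->
  map (upd_list rho ys vals) zs = map rho zs.
Proof. intros H; apply map_ext_in; intros z Hz; apply upd_list_notin; auto. Qed.

Lemma map_upd_notin rho x r l : (forall z, In z l -> z <> x) -> map (upd P rho x r) l = map rho l.
Proof. intros Hl; apply map_ext_in; intros z Hz; apply upd_neq; auto. Qed.

Lemma int_sorted_upd_list rho xs vals : int_sorted rho ->
  (forall x, In x xs -> fst x = SG) -> int_sorted (upd_list rho xs vals).
Proof.
  revert rho vals; induction xs; intros rho vals Hw Hs; destruct vals; simpl; auto.
  apply IHxs; [|intros; apply Hs; simpl; auto].
  apply int_sorted_upd; auto. intros E. rewrite (Hs a) in E; [discriminate | simpl; auto].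
Qed.

Lemma NoDup_app_disj {A} (l1 l2 : list A) a : NoDup (l1 ++ l2) -> In a l1 -> In a l2 -> False.
Proof.
  induction l1; simpl; intros Hn H1 H2; auto.
  inversion Hn; subst. destruct H1 as [->|H1]; eauto.
  apply H3, in_or_app; auto.
Qed.

Lemma gv_in v X : In (SG, v) (gv X) <-> In v X.
Proof.
  unfold gv; rewrite in_map_iff.
  split; [intros [x [E H]]; inversion E; subst; auto | intros; exists v; auto].
Qed.

Lemma gv_sort y X : In y (gv X) -> fst y = SG.
Proof. unfold gv; rewrite in_map_iff; intros [x [<- _]]; auto. Qed.

Lemma gv_notSI n X : ~ In (SI, n) (gv X).
Proof. intro Hi; apply gv_sort in Hi; discriminate. Qed.

Lemma gv_disjoint X Y : (forall v, In v X -> ~ In v Y) -> forall z, In z (gv X) -> ~ In z (gv Y).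
Proof.
  intros H z Hz1 Hz2. pose proof (gv_sort _ _ Hz1) as Hs.
  destruct z as [s z]; simpl in Hs; subst. apply gv_in in Hz1, Hz2. eapply H; eauto.
Qed.

Lemma gv_NoDup X : NoDup X -> NoDup (gv X).
Proof.
  unfold gv; induction 1; simpl; constructor; auto.
  rewrite in_map_iff; intros [y [E Hy]]; inversion E; subst; auto.
Qed.

Lemma gv_length X : length (gv X) = length X.
Proof. apply length_map. Qed.

Lemma gv_app X Y : gv (X ++ Y) = gv X ++ gv Y.
Proof. apply map_app. Qed.

Lemma map_upd_list_gv rho X vals : NoDup X -> length vals = length X ->
  map (upd_list rho (gv X) vals) (gv X) = vals.
Proof. intros; apply map_upd_list; [apply gv_NoDup | rewrite gv_length]; auto. Qed.

Lemma map_upd_gv_SI rho n v X : map (upd P rho (SI, n) v) (gv X) = map rho (gv X).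
Proof. apply map_upd_notin; intros z Hz ->; eapply gv_notSI; eauto. Qed.

Lemma firstn_app_exact {A} (l1 l2 : list A) n : n = length l1 -> firstn n (l1 ++ l2) = l1.
Proof. intros ->; induction l1; simpl; auto; f_equal; auto. Qed.

Lemma skipn_app_exact {A} (l1 l2 : list A) n : n = length l1 -> skipn n (l1 ++ l2) = l2.
Proof. intros ->; induction l1; simpl; auto. Qed.

Lemma Forall2_vts rho xs rs : Forall2 (tev P rho) (vts xs) rs <-> rs = map rho xs.
Proof.
  revert rs; induction xs; simpl; intros rs; split; intros H.
  - inversion H; auto.
  - subst; constructor.
  - inversion H; subst. simpl in H2. subst. f_equal. apply IHxs; auto.
  - subst; constructor; simpl; auto. apply IHxs; auto.
Qed.

Lemma Forall2_app_l {A B} (R : A -> B -> Prop) l1 l2 rs :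
  Forall2 R (l1 ++ l2) rs <-> exists r1 r2, rs = r1 ++ r2 /\ Forall2 R l1 r1 /\ Forall2 R l2 r2.
Proof.
  split.
  - intros H; destruct (Forall2_app_inv_l _ _ H) as [r1 [r2 [H1 [H2 ->]]]]; exists r1, r2; auto.
  - intros [r1 [r2 [-> [H1 H2]]]]; apply Forall2_app; auto.
Qed.

Lemma Forall2_single {A B} (R : A -> B -> Prop) a rs :
  Forall2 R [a] rs <-> exists r, rs = [r] /\ R a r.
Proof.
  split; [intros HF; inversion HF as [|x y l l' Hxy Hr]; subst; inversion Hr; subst; eauto
         | intros [r [-> Hr]]; constructor; auto].
Qed.

Lemma int_term_value rho t : int_sorted rho -> int_term P t -> exists k, tev P rho t (num P k).
Proof.
  intros Hw; induction t; simpl; intros H.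
  4-6: destruct H as [H1 H2]; destruct (IHt1 H1) as [i Hi]; destruct (IHt2 H2) as [j Hj].
  - destruct x as [[|] n]; [tauto|]. destruct (Hw n) as [k Hk]; exists k; simpl; auto.
  - destruct H as [n ->]; exists n; auto.
  - destruct (IHt H) as [k Hk]; exists (Z.abs k), k; auto.
  - exists (i + j)%Z, i, j; auto.
  - exists (i - j)%Z, i, j; auto.
  - exists (i * j)%Z, i, j; auto.
Qed.

Lemma sort_ok_denotes rho x t : int_sorted rho -> sort_ok P x t ->
  exists v, (forall r, tev P rho t r <-> r = v) /\ sort_fits x v.
Proof.
  intros Hw Hs. enough (exists v, tev P rho t v /\ sort_fits x v) as [v [Hv Hd]]
    by (exists v; split; auto; apply tev_unique; auto).
  revert Hs.
  unfold sort_ok, sort_fits; destruct (fst x); intros H.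
  - assert (Hv : exists v, tev P rho t v).
    { destruct t; simpl in *; try solve [eauto].
      1: destruct (int_term_value rho t Hw H) as [k Hk]; exists (num P (Z.abs k)), k; auto.
      all: destruct H as [H1 H2]; destruct (int_term_value _ _ Hw H1) as [i Hi];
           destruct (int_term_value _ _ Hw H2) as [j Hj]; eexists; exists i, j; eauto. }
    destruct Hv as [v Hv]; exists v; split; auto; discriminate.
  - destruct (int_term_value rho t Hw H) as [k Hk]; exists (num P k); split; eauto.
Qed.

Section Blocks.
Context {Pr : Type} (pi : bool -> Pr -> list T -> Prop).

Lemma hsat_bigAnd w rho l : hsat pi w rho (bigAnd l) <-> Forall (hsat pi w rho) l.
Proof.
  induction l as [|a l IH]; simpl.
  - split; auto.
  - destruct l.
    + split; intros H; [constructor; auto | inversion H; auto].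
    + change (hsat pi w rho (FAnd a (bigAnd (f :: l))) <-> Forall (hsat pi w rho) (a :: f :: l)).
      simpl hsat at 1. rewrite IH.
      split; [intros [H1 H2]; constructor; auto | intros H; inversion H; auto].
Qed.

Lemma hsat_bigAnd_cons w rho a l :
  hsat pi w rho (bigAnd (a :: l)) <-> hsat pi w rho a /\ hsat pi w rho (bigAnd l).
Proof. rewrite !hsat_bigAnd, Forall_cons_iff; reflexivity. Qed.

Lemma hsat_bigAnd_app w rho l1 l2 :
  hsat pi w rho (bigAnd (l1 ++ l2)) <-> hsat pi w rho (bigAnd l1) /\ hsat pi w rho (bigAnd l2).
Proof. rewrite !hsat_bigAnd, Forall_app; reflexivity. Qed.

Lemma hsat_bigOr w rho l : hsat pi w rho (bigOr l) <-> Exists (hsat pi w rho) l.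
Proof.
  induction l as [|a l IH]; simpl.
  - split; [tauto | intros H; inversion H].
  - destruct l.
    + split; intros H; [constructor; auto | inversion H; auto; inversion H1].
    + change (hsat pi w rho (FOr a (bigOr (f :: l))) <-> Exists (hsat pi w rho) (a :: f :: l)).
      simpl hsat at 1. rewrite IH, (Exists_cons _ a); reflexivity.
Qed.

Lemma hsat_alls_gv w X A rho :
  hsat pi w rho (alls (gv X) A) <->
  forall vals, length vals = length X -> hsat pi w (upd_list rho (gv X) vals) A.
Proof.
  revert rho; induction X as [|x X IH]; intros rho; simpl.
  - split; [intros H [|] Hl; simpl in *; auto; discriminate | intros H; apply (H []); auto].
  - split.
    + intros H [|v vals] Hl; simpl in Hl; [discriminate|]. simpl. apply IH; auto.
    + intros H r. apply IH. intros vals Hl. apply (H (r :: vals)); simpl; auto.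
Qed.

Lemma hsat_exs_gv w X A rho :
  hsat pi w rho (exs (gv X) A) <->
  exists vals, length vals = length X /\ hsat pi w (upd_list rho (gv X) vals) A.
Proof.
  revert rho; induction X as [|x X IH]; intros rho; simpl.
  - split; [intros H; exists []; auto | intros [[|] [Hl H]]; simpl in *; auto; discriminate].
  - split.
    + intros [r H]. apply IH in H. destruct H as [vals [Hl H]]. exists (r :: vals); simpl; auto.
    + intros [[|v vals] [Hl H]]; simpl in Hl; [discriminate|]. exists v. apply IH. exists vals; auto.
Qed.

Lemma alls_app (l1 l2 : list var) (A : form T Pr) : alls (l1 ++ l2) A = alls l1 (alls l2 A).
Proof. apply fold_right_app. Qed.

Lemma exs_app (l1 l2 : list var) (A : form T Pr) : exs (l1 ++ l2) A = exs l1 (exs l2 A).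
Proof. apply fold_right_app. Qed.

Lemma hsat_alls_valid (A : form T Pr) xs w :
  (forall rho, int_sorted rho -> hsat pi w rho A) ->
  forall rho, int_sorted rho -> hsat pi w rho (alls xs A).
Proof.
  induction xs as [|x xs IH]; simpl; intros H rho Hr; auto.
  apply hsat_all; intros r Hd; apply IH; auto; apply int_sorted_upd; auto.
Qed.

Lemma hsat_alls w xs (A : form T Pr) rho : int_sorted rho ->
  hsat pi w rho (alls xs A) <->
  forall rho', int_sorted rho' -> (forall y, ~ In y xs -> rho' y = rho y) -> hsat pi w rho' A.
Proof.
  revert rho; induction xs as [|x xs IH]; intros rho Hr.
  - simpl. split.
    + intros HA rho' _ Hag. apply (hsat_ext pi A w rho rho'); auto. intros y _; rewrite Hag; auto.
    + intros Hq; apply Hq; auto.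
  - change (alls (x :: xs) A) with (FAll x (alls xs A)). rewrite hsat_all. split.
    + intros Hq rho' Hw Hag.
      assert (Hd : sort_fits x (rho' x)).
      { intros Hs. destruct x as [[|] n]; simpl in Hs; try discriminate. apply Hw. }
      specialize (Hq (rho' x) Hd). rewrite IH in Hq; [|apply int_sorted_upd; auto].
      apply Hq; auto. intros y Hy. unfold upd. destruct (var_eqb y x) eqn:E.
      * apply var_eqb_true in E; subst; auto.
      * apply Hag. simpl. intros [E'|E']; [subst; rewrite var_eqb_refl in E; discriminate | tauto].
    + intros Hq r Hd. rewrite IH; [|apply int_sorted_upd; auto].
      intros rho' Hw Hag. apply Hq; auto. intros y Hy. simpl in Hy.
      rewrite Hag; [|tauto]. apply upd_neq. intro; subst; tauto.
Qed.

Lemma hsat_closure w (A : form T Pr) rho : int_sorted rho ->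
  hsat pi w rho (closure A) <-> forall rho', int_sorted rho' -> hsat pi w rho' A.
Proof.
  intros Hr. unfold closure. rewrite hsat_alls; auto. split.
  - intros Hq rho'' Hw.
    set (rho' := fun y => if in_dec var_eq_dec y (nodup var_eq_dec (fv A)) then rho'' y else rho y).
    apply (hsat_ext pi A w rho'' rho').
    + intros y Hy. unfold rho'. destruct (in_dec _ _ _) as [|n]; auto.
      exfalso; apply n, nodup_In; auto.
    + apply Hq.
      * intros k. unfold rho'. destruct (in_dec _ _ _); auto.
      * intros y Hy. unfold rho'. destruct (in_dec _ _ _); tauto.
  - intros Hq rho' Hw _. apply Hq; auto.
Qed.

Lemma hsat_pred2 (pr : Pr) w rho a b :
  hsat pi w rho (FPred pr [a; b]) <->
  exists ra rb, tev P rho a ra /\ tev P rho b rb /\ pi w pr [ra; rb].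
Proof.
  simpl; split.
  - intros [rs [HF Hp]]. inversion HF as [|x y l l' Hxy Hr]; subst.
    inversion Hr as [|x' y' l2 l2' Hxy' Hr']; subst. inversion Hr'; subst. eauto.
  - intros [ra [rb [H1 [H2 H3]]]]; exists [ra; rb]; split; auto.
Qed.

Lemma hsat_pred_vars w rho pr xs :
  hsat pi w rho (FPred pr (vts xs)) <-> pi w pr (map rho xs).
Proof.
  simpl. split.
  - intros [rs [HF Hp]]. apply Forall2_vts in HF; subst; auto.
  - intros Hp. exists (map rho xs); split; auto. apply Forall2_vts; auto.
Qed.

Lemma hsat_pred_vars_last w rho pr xs c :
  hsat pi w rho (FPred pr (vts xs ++ [FVar c])) <-> pi w pr (map rho xs ++ [rho c]).
Proof.
  replace (vts xs ++ [FVar c]) with (@vts T (xs ++ [c])) by apply map_app.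
  rewrite hsat_pred_vars, map_app; reflexivity.
Qed.

End Blocks.

Lemma hsat_emb (pi0 : bool -> pred0 -> list T -> Prop) (pi2 : bool -> pred2 T -> list T -> Prop)
  (Hp : forall w p rs, pi2 w (P0 p) rs <-> pi0 w p rs) (A : form T pred0) :
  forall w rho, hsat pi2 w rho (emb A) <-> hsat pi0 w rho A.
Proof.
  induction A; simpl; intros w rho; try tauto.
  - split; intros [rs [H1 H2]]; exists rs; split; auto; apply Hp; auto.
  - rewrite IHA1, IHA2; tauto.
  - rewrite IHA1, IHA2; tauto.
  - split; intros H w' Ha Hx; apply IHA2; apply H; auto; apply IHA1; auto.
  - destruct (fst x); split; intros H r; apply IHA; auto; apply H.
  - destruct (fst x); split; intros [r H]; exists r; apply IHA; auto.
Qed.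

End Kripke.

Section StandardModel.
Variable P : PT.
Notation T := (pt P).
Notation hsat := (hsat P).
Notation upd_list := (upd_list P).
Variables (H Tm : patom P -> Prop).

Definition interp0 (w : bool) (p : pred0) (rs : list T) : Prop :=
  match p with
  | PSym q _ => (if w then H else Tm) (q, rs)
  | _ => pinterp P p rs
  end.

Definition asg0 : var -> T := fun _ => num P 0.

Definition cond_sat w X V F (xs vs : list T) : Prop :=
  hsat interp0 w (upd_list (upd_list asg0 (gv X) xs) (gv V) vs) F.

Fixpoint lex_lt (a b : list T) : Prop :=
  match a, b with
  | x :: a', y :: b' => ptlt P x y \/ (x = y /\ lex_lt a' b')
  | _, _ => False
  end.

(** The interpretation of [Start] forced by the recursion in [D0]. *)
Fixpoint start_chain w X V F (vs : list T) (n : nat) (xs : list T) {struct n} : Prop :=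
  match n with
  | O => True
  | S m => cond_sat w X V F xs vs /\
           match m with
           | O => True
           | S _ => exists us, length us = length X /\ lex_lt xs us /\ start_chain w X V F vs m us
           end
  end.

(** The integer argument [k] enters through [Z.to_nat k], so every [k <= 0]
    gives the trivially true chain of length 0, as the first axiom of [D0]
    requires.  [Atmost] quantifies over accessible worlds because its [D1]
    definiens is an implication. *)
Definition interp2 (w : bool) (p : pred2 T) (rs : list T) : Prop :=
  match p with
  | P0 q => interp0 w q rs
  | PStart X V F => exists k, last rs (num P 0) = num P k /\
      start_chain w X V F (firstn (length V) (skipn (length X) rs)) (Z.to_nat k)
        (firstn (length X) rs)
  | PAtleast X V F => exists xs k, length xs = length X /\
      start_chain w X V F (firstn (length V) rs) (Z.to_nat k) xs /\
      (ptlt P (last rs (num P 0)) (num P k) \/ num P k = last rs (num P 0))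
  | PAtmost X V F => forall w', accessible w' w -> forall xs k, length xs = length X ->
      start_chain w' X V F (firstn (length V) rs) (Z.to_nat k) xs ->
      (ptlt P (num P k) (last rs (num P 0)) \/ num P k = last rs (num P 0))
  end.

Section Persistence.
Hypothesis HTsub : forall a, H a -> Tm a.

Lemma interp0_persist p rs : interp0 true p rs -> interp0 false p rs.
Proof. destruct p; simpl; auto. Qed.

Lemma cond_sat_persist X V F xs vs : cond_sat true X V F xs vs -> cond_sat false X V F xs vs.
Proof.
  intros; eapply hsat_persist; eauto using interp0_persist, accessible_there.
Qed.

Lemma start_chain_persist X V F vs n :
  forall xs, start_chain true X V F vs n xs -> start_chain false X V F vs n xs.
Proof.
  induction n as [|n IH]; intros xs Hs; simpl; auto.
  destruct n as [|m].
  - destruct Hs; split; auto; apply cond_sat_persist; auto.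
  - destruct Hs as [H1 [us [H2 [H3 H4]]]]; split; [apply cond_sat_persist; auto|].
    exists us; auto.
Qed.

Lemma interp2_persist p rs : interp2 true p rs -> interp2 false p rs.
Proof.
  destruct p; simpl.
  - apply interp0_persist.
  - intros [xs [k [H1 [H2 H3]]]]; exists xs, k; repeat split; auto; apply start_chain_persist; auto.
  - intros Hq w' Ha; apply Hq. right; destruct Ha; auto.
  - intros [k [H1 H2]]; exists k; split; auto; apply start_chain_persist; auto.
Qed.

Lemma hsat2_persist w w' rho A : accessible w' w -> hsat interp2 w rho A -> hsat interp2 w' rho A.
Proof. intros; eapply hsat_persist; eauto using interp2_persist. Qed.

End Persistence.

Lemma hsat2_emb w rho (A : form T pred0) : hsat interp2 w rho (emb A) <-> hsat interp0 w rho A.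
Proof. apply hsat_emb; reflexivity. Qed.

Lemma num_le a b : (ptlt P (num P a) (num P b) \/ num P a = num P b) <-> (a <= b)%Z.
Proof.
  rewrite num_lt. split.
  - intros [H1|H1]; [lia | apply num_inj in H1; lia].
  - intros Hab. destruct (Z.eq_dec a b); [right; subst; auto | left; lia].
Qed.

Definition int_denotes rho (a : fterm T) (k : Z) := forall r, tev P rho a r <-> r = num P k.

Lemma int_denotes_var rho x k : rho x = num P k -> int_denotes rho (FVar x) k.
Proof. intros E r; simpl; rewrite E; tauto. Qed.

Lemma int_denotes_cst rho k : int_denotes rho (FCst (num P k)) k.
Proof. intros r; simpl; tauto. Qed.

Lemma int_denotes_abs rho a k : int_denotes rho a k -> int_denotes rho (FAbs a) (Z.abs k).
Proof.
  intros Ha r; simpl; split.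
  - intros [i [Hi ->]]. apply Ha in Hi; apply num_inj in Hi; subst; auto.
  - intros ->; exists k; split; auto; apply Ha; auto.
Qed.

Lemma int_denotes_binop rho a b i j (op : fterm T -> fterm T -> fterm T) (f : Z -> Z -> Z) :
  (forall r, tev P rho (op a b) r <->
     exists i' j', tev P rho a (num P i') /\ tev P rho b (num P j') /\ r = num P (f i' j')) ->
  int_denotes rho a i -> int_denotes rho b j -> int_denotes rho (op a b) (f i j).
Proof.
  intros Hop Ha Hb r; rewrite Hop; split.
  - intros [i' [j' [Hi [Hj ->]]]]. apply Ha in Hi; apply Hb in Hj.
    apply num_inj in Hi, Hj; subst; auto.
  - intros ->; exists i, j; repeat split; [apply Ha | apply Hb]; auto.
Qed.

Lemma int_denotes_add rho a b i j :
  int_denotes rho a i -> int_denotes rho b j -> int_denotes rho (FAdd a b) (i + j).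
Proof. apply int_denotes_binop; reflexivity. Qed.

Lemma int_denotes_sub rho a b i j :
  int_denotes rho a i -> int_denotes rho b j -> int_denotes rho (FSub a b) (i - j).
Proof. apply int_denotes_binop; reflexivity. Qed.

Lemma int_denotes_mul rho a b i j :
  int_denotes rho a i -> int_denotes rho b j -> int_denotes rho (FMul a b) (i * j).
Proof. apply int_denotes_binop; reflexivity. Qed.

Lemma hsat_le_num w rho a b i j : int_denotes rho a i -> int_denotes rho b j ->
  (hsat interp0 w rho (FPred PLe [a; b]) <-> (i <= j)%Z).
Proof.
  intros Ha Hb. rewrite hsat_pred2. simpl. rewrite <- num_le. split.
  - intros [ra [rb [H1 [H2 H3]]]]. apply Ha in H1; apply Hb in H2; subst; auto.
  - intros Hij. exists (num P i), (num P j). repeat split; [apply Ha | apply Hb |]; auto.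
Qed.

Lemma hsat_lt_num w rho a b i j : int_denotes rho a i -> int_denotes rho b j ->
  (hsat interp0 w rho (FPred PLt [a; b]) <-> (i < j)%Z).
Proof.
  intros Ha Hb. rewrite hsat_pred2. simpl. rewrite <- (num_lt P). split.
  - intros [ra [rb [H1 [H2 H3]]]]. apply Ha in H1; apply Hb in H2; subst; auto.
  - intros Hij. exists (num P i), (num P j). repeat split; [apply Ha | apply Hb |]; auto.
Qed.

Lemma hsat_ge_num w rho a b i j : int_denotes rho a i -> int_denotes rho b j ->
  (hsat interp0 w rho (FPred PGe [a; b]) <-> (j <= i)%Z).
Proof.
  intros Ha Hb. rewrite hsat_pred2. simpl. rewrite <- num_le. split.
  - intros [ra [rb [H1 [H2 [H3|H3]]]]]; apply Ha in H1; apply Hb in H2; subst; auto.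
  - intros Hij. exists (num P i), (num P j).
    repeat split; [apply Ha | apply Hb | destruct Hij]; auto.
Qed.

Lemma hsat_gt_num w rho a b i j : int_denotes rho a i -> int_denotes rho b j ->
  (hsat interp0 w rho (FPred PGt [a; b]) <-> (j < i)%Z).
Proof.
  intros Ha Hb. rewrite hsat_pred2. simpl. rewrite <- (num_lt P). split.
  - intros [ra [rb [H1 [H2 H3]]]]. apply Ha in H1; apply Hb in H2; subst; auto.
  - intros Hij. exists (num P i), (num P j). repeat split; [apply Ha | apply Hb |]; auto.
Qed.

Lemma hsat_eq_num w rho z a k : int_denotes rho a k ->
  (hsat interp0 w rho (FEq (FVar z) a) <-> rho z = num P k).
Proof.
  intros Ha; simpl; split.
  - intros [r [-> H2]]. apply Ha; auto.
  - intros E. exists (rho z); split; auto. apply Ha; auto.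
Qed.

Lemma hsat2_cmp2 w rho p a b :
  hsat interp2 w rho (cmp2 P p a b) <-> hsat interp0 w rho (FPred p [a; b]).
Proof. exact (hsat2_emb w rho (FPred p [a; b])). Qed.

Lemma hsat_start_atom w rho X V F xs t : length xs = length X ->
  hsat interp2 w rho (start_atom P X V F xs t) <->
  exists k, tev P rho t (num P k) /\
            start_chain w X V F (map rho (gv V)) (Z.to_nat k) (map rho (gv xs)).
Proof.
  intros Hl; unfold start_atom; simpl.
  assert (L1 : length (map rho (gv xs)) = length X) by (rewrite length_map, gv_length; auto).
  assert (L2 : length (map rho (gv V)) = length V) by (rewrite length_map, gv_length; auto).
  split.
  - intros [rs [HF Hp]].
    apply Forall2_app_l in HF; destruct HF as [r1 [r2 [-> [H1 H2]]]].
    apply Forall2_app_l in H2; destruct H2 as [r3 [r4 [-> [H3 H4]]]].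
    apply Forall2_vts in H1; apply Forall2_vts in H3; subst.
    apply Forall2_single in H4; destruct H4 as [r [-> Hr]].
    destruct Hp as [k [Hk Hs]]. rewrite app_assoc, last_last in Hk. subst r.
    rewrite (firstn_app_exact _ _ _ (eq_sym L1)), (skipn_app_exact _ _ _ (eq_sym L1)),
      (firstn_app_exact _ _ _ (eq_sym L2)) in Hs.
    exists k; auto.
  - intros [k [Hk Hs]]. exists (map rho (gv xs) ++ map rho (gv V) ++ [num P k]). split.
    + apply Forall2_app; [apply Forall2_vts; auto|].
      apply Forall2_app; [apply Forall2_vts; auto|]. constructor; auto.
    + exists k. split; [rewrite app_assoc, last_last; auto|].
      rewrite (firstn_app_exact _ _ _ (eq_sym L1)), (skipn_app_exact _ _ _ (eq_sym L1)),
        (firstn_app_exact _ _ _ (eq_sym L2)); auto.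
Qed.

Lemma cond_sat_map w X V F rho : sig_ok P X V F ->
  cond_sat w X V F (map rho (gv X)) (map rho (gv V)) <-> hsat interp0 w rho F.
Proof.
  intros [Hnd [_ Hfv]]. unfold cond_sat. apply hsat_ext. intros y Hy.
  apply Hfv in Hy. rewrite gv_app in Hy. apply in_app_or in Hy.
  destruct (classic (In y (gv V))) as [HV|HV].
  - apply upd_list_map_in; auto.
  - rewrite upd_list_notin; auto. destruct Hy as [Hy|Hy]; [|tauto]. apply upd_list_map_in; auto.
Qed.

Lemma hsat_lex_disj w rho xs : forall us eqs,
  Exists (hsat interp2 w rho) (lex_disj P xs us eqs) <->
  hsat interp2 w rho (bigAnd eqs) /\ lex_lt (map rho (gv xs)) (map rho (gv us)).
Proof.
  induction xs as [|x xs IH]; intros [|u us] eqs; cbn [lex_disj].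
  1-3: simpl; split; [intros Hx; inversion Hx | intros [_ []]].
  assert (Hand : forall A B, hsat interp2 w rho (FAnd A B) <->
                             hsat interp2 w rho A /\ hsat interp2 w rho B) by reflexivity.
  rewrite Exists_cons, IH, Hand, hsat_bigAnd_app, hsat_bigAnd_cons.
  unfold cmp2. rewrite hsat_pred2. cbn [map gv lex_lt]. simpl hsat.
  split.
  - intros [[[ra [rb [H1 [H2 H3]]]] H4] | [[H4 [[r [E1 E2]] _]] H6]]; simpl in *; subst; auto.
  - intros [H4 [Hl | [He Hl]]].
    + left; split; auto. exists (rho (SG, x)), (rho (SG, u)); simpl; auto.
    + right; repeat split; auto. exists (rho (SG, x)); simpl; auto.
Qed.

Lemma hsat_lexlt w rho xs us :
  hsat interp2 w rho (lexlt P xs us) <-> lex_lt (map rho (gv xs)) (map rho (gv us)).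
Proof.
  unfold lexlt; rewrite hsat_bigOr, hsat_lex_disj. simpl. split; [tauto|]. intros; split; auto.
Qed.

Lemma int_denotes_SI rho n : int_sorted P rho -> exists m, int_denotes rho (FVar (SI, n)) m.
Proof. intros Hr. destruct (Hr n) as [m Hm]. exists m. apply int_denotes_var; auto. Qed.

Lemma hsat_cmp2_vars w rho p x y :
  hsat interp2 w rho (cmp2 P p (FVar x) (FVar y)) <-> interp0 w p [rho x; rho y].
Proof. exact (hsat_pred_vars P interp2 w rho (P0 p) [x; y]). Qed.

Lemma start_nonpos_valid X V F n w rho : int_sorted P rho ->
  hsat interp2 w rho
    (FImp (cmp2 P PLe (FVar (SI, n)) (ncst P 0)) (start_atom P X V F X (FVar (SI, n)))).
Proof.
  intros Hr w' _ Hle. destruct (int_denotes_SI rho n Hr) as [m Hm].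
  rewrite hsat2_cmp2, (hsat_le_num _ _ _ _ m 0 Hm (int_denotes_cst rho 0)) in Hle.
  apply hsat_start_atom; auto. exists m. split; [apply Hm; auto|].
  replace (Z.to_nat m) with 0 by lia. simpl; auto.
Qed.

Lemma start_one_valid X V F w rho : sig_ok P X V F ->
  hsat interp2 w rho (FIff (start_atom P X V F X (ncst P 1)) (emb F)).
Proof.
  intros Hsig. apply hsat_iff; intros w' _.
  rewrite hsat_start_atom, hsat2_emb, <- (cond_sat_map w' X V F rho Hsig); auto.
  split.
  - intros [k [Hk Hs]]. simpl in Hk. apply num_inj in Hk; subst. apply Hs.
  - intros Hf. exists 1%Z. split; simpl; auto.
Qed.

Lemma hsat_lexlt_start_at X V F U n w rho m us : NoDup U -> length U = length X ->
  length us = length U -> (forall u, In u U -> ~ In u (X ++ V)) -> int_denotes rho (FVar (SI, n)) m ->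
  (hsat interp2 w (upd_list rho (gv U) us) (lexlt P X U) /\
   hsat interp2 w (upd_list rho (gv U) us) (start_atom P X V F U (FVar (SI, n)))) <->
  lex_lt (map rho (gv X)) us /\ start_chain w X V F (map rho (gv V)) (Z.to_nat m) us.
Proof.
  intros HU HUl Hl HUd Hm.
  assert (HU_fresh : forall Y, (forall v, In v Y -> In v (X ++ V)) ->
                     forall z, In z (gv Y) -> ~ In z (gv U)).
  { intros Y HY. apply gv_disjoint. intros v Hv HvU. apply (HUd v HvU), HY; auto. }
  rewrite hsat_lexlt, hsat_start_atom, map_upd_list_gv by auto.
  rewrite !map_upd_list_notin by (apply HU_fresh; intros; apply in_or_app; auto).
  split.
  - intros [Hlx [k [Hk Hs]]]. simpl in Hk. rewrite upd_list_notin in Hk by apply gv_notSI.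
    apply Hm, num_inj in Hk. subst; auto.
  - intros [Hlx Hs]. split; auto. exists m. split; auto. simpl.
    rewrite upd_list_notin by apply gv_notSI. apply Hm; auto.
Qed.

Lemma start_succ_valid X V F U n w rho : sig_ok P X V F -> NoDup U -> length U = length X ->
  (forall u, In u U -> ~ In u (X ++ V)) -> int_sorted P rho ->
  hsat interp2 w rho
    (FImp (cmp2 P PGt (FVar (SI, n)) (ncst P 0))
       (FIff (start_atom P X V F X (FAdd (FVar (SI, n)) (ncst P 1)))
             (FAnd (emb F) (exs (gv U) (FAnd (lexlt P X U) (start_atom P X V F U (FVar (SI, n)))))))).
Proof.
  intros Hsig HU HUl HUd Hr w' _ Hgt.
  destruct (int_denotes_SI rho n Hr) as [m Hm].
  rewrite hsat2_cmp2, (hsat_gt_num _ _ _ _ m 0 Hm (int_denotes_cst rho 0)) in Hgt.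
  assert (HN1 : int_denotes rho (FAdd (FVar (SI, n)) (ncst P 1)) (m + 1))
    by (apply int_denotes_add; [apply Hm | apply int_denotes_cst]).
  apply hsat_iff; intros w'' _.
  rewrite hsat_start_atom by auto.
  destruct (Z.to_nat m) as [|j] eqn:Ej; [lia|].
  assert (Ej1 : Z.to_nat (m + 1) = S (S j)) by lia.
  split.
  - intros [k [Hk Hs]]. apply HN1, num_inj in Hk; subst k. rewrite Ej1 in Hs.
    destruct Hs as [Hf [us [Hl [Hlx Hs]]]]. split.
    + apply hsat2_emb, (cond_sat_map _ _ _ _ _ Hsig); auto.
    + apply hsat_exs_gv. exists us. split; [lia|].
      apply (proj2 (hsat_lexlt_start_at X V F U n w'' rho m us HU HUl ltac:(lia) HUd Hm)).
      rewrite Ej; auto.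
  - intros [Hf Hex]. apply hsat2_emb, (cond_sat_map _ _ _ _ _ Hsig) in Hf.
    apply hsat_exs_gv in Hex. destruct Hex as [us [Hl Hq]].
    apply (hsat_lexlt_start_at X V F U n w'' rho m us HU HUl Hl HUd Hm) in Hq.
    rewrite Ej in Hq. destruct Hq as [Hlx Hs].
    exists (m + 1)%Z. split; [apply HN1; auto|].
    rewrite Ej1. split; auto. exists us. split; auto; lia.
Qed.

Lemma D0_valid A : D0 P A -> forall w rho, int_sorted P rho -> hsat interp2 w rho A.
Proof.
  intros [X [V [F [U [n [Hsig [HU [HUl [HUd Hor]]]]]]]]] w.
  destruct Hor as [-> | [-> | ->]]; apply hsat_alls_valid; intros rho Hr.
  - apply start_nonpos_valid; auto.
  - apply start_one_valid; auto.
  - apply start_succ_valid; auto.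
Qed.

Section CountingAxioms.
Variables (X V : list nat) (F : form T pred0) (y n : nat).
Hypotheses (HXV : NoDup (X ++ V)) (Hy : ~ In y (X ++ V)).

Let asg_at rho xs k := upd P (upd_list rho (gv X) xs) (SI, n) (num P k).

Lemma hsat_start_at w rho xs k : length xs = length X ->
  hsat interp2 w (asg_at rho xs k) (start_atom P X V F X (FVar (SI, n))) <->
  start_chain w X V F (map rho (gv V)) (Z.to_nat k) xs.
Proof.
  intros Hl. unfold asg_at. rewrite hsat_start_atom, !map_upd_gv_SI by auto.
  rewrite map_upd_list_gv by (auto; eapply NoDup_app_remove_r; eauto).
  rewrite map_upd_list_notin.
  2: { apply gv_disjoint; intros v Hv HvV. eapply NoDup_app_disj; eauto. }
  split.
  - intros [k' [Hk Hs]]. simpl in Hk. rewrite upd_eq in Hk. apply num_inj in Hk; subst; auto.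
  - intros Hs. exists k. simpl. rewrite upd_eq. auto.
Qed.

Lemma asg_at_y rho xs k : asg_at rho xs k (SG, y) = rho (SG, y).
Proof.
  unfold asg_at. rewrite upd_neq by discriminate.
  apply upd_list_notin. rewrite gv_in. intro; apply Hy, in_or_app; auto.
Qed.

Lemma asg_at_n rho xs k : asg_at rho xs k (SI, n) = num P k.
Proof. apply upd_eq. Qed.

Lemma atleast_def_valid w rho :
  hsat interp2 w rho
    (FIff (FPred (PAtleast X V F) (vts (gv V) ++ [FVar (SG, y)]))
          (exs (gv X ++ [(SI, n)])
               (FAnd (start_atom P X V F X (FVar (SI, n)))
                     (cmp2 P PGe (FVar (SI, n)) (FVar (SG, y)))))).
Proof.
  apply hsat_iff; intros w' _.
  rewrite hsat_pred_vars_last, exs_app, hsat_exs_gv. simpl interp2.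
  rewrite firstn_app_exact, last_last by (rewrite length_map, gv_length; auto).
  split.
  - intros [xs [k [Hl [Hs Hc]]]]. exists xs. split; auto. exists k. split.
    + apply hsat_start_at; auto.
    + apply hsat_cmp2_vars. fold (asg_at rho xs k). rewrite asg_at_y, asg_at_n. simpl; tauto.
  - intros [xs [Hl [k [Hs Hc]]]]. fold (asg_at rho xs k) in Hs, Hc.
    apply hsat_start_at in Hs; auto. apply hsat_cmp2_vars in Hc.
    rewrite asg_at_y, asg_at_n in Hc. exists xs, k. simpl in Hc; tauto.
Qed.

Lemma atmost_def_valid w rho :
  hsat interp2 w rho
    (FIff (FPred (PAtmost X V F) (vts (gv V) ++ [FVar (SG, y)]))
          (alls (gv X ++ [(SI, n)])
                (FImp (start_atom P X V F X (FVar (SI, n)))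
                      (cmp2 P PLe (FVar (SI, n)) (FVar (SG, y)))))).
Proof.
  apply hsat_iff; intros w' _.
  rewrite hsat_pred_vars_last, alls_app, hsat_alls_gv. simpl interp2.
  rewrite firstn_app_exact, last_last by (rewrite length_map, gv_length; auto).
  split.
  - intros Hq xs Hl k w'' Ha Hs. fold (asg_at rho xs k) in Hs |- *.
    apply hsat_start_at in Hs; auto. apply hsat_cmp2_vars.
    rewrite asg_at_y, asg_at_n. apply (Hq w'' Ha xs); auto.
  - intros Hq w'' Ha xs k Hl Hs.
    specialize (Hq xs Hl k w'' Ha). fold (asg_at rho xs k) in Hq.
    rewrite hsat_start_at, hsat_cmp2_vars, asg_at_y, asg_at_n in Hq; auto.
    apply Hq; auto.
Qed.

End CountingAxioms.

Lemma D1_valid A : D1 P A -> forall w rho, int_sorted P rho -> hsat interp2 w rho A.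
Proof.
  intros [X [V [F [y [n [[HXV _] [Hy Hor]]]]]]] w.
  destruct Hor as [-> | ->]; apply hsat_alls_valid; intros rho _.
  - apply atleast_def_valid; auto.
  - apply atmost_def_valid; auto.
Qed.

End StandardModel.

Section HilbertSoundness.
Variable P : PT.
Notation T := (pt P).
Notation hsat := (hsat P).
Variable pi : bool -> pred2 T -> list T -> Prop.
Hypothesis pi_persist : forall p rs, pi true p rs -> pi false p rs.

Let persist w w' rho A : accessible w' w -> hsat pi w rho A -> hsat pi w' rho A.
Proof. intros; eapply hsat_persist; eauto. Qed.

Lemma weak_em_valid w rho (F G : form T (pred2 T)) :
  hsat pi w rho (FOr F (FOr (FImp F G) (FNot G))).
Proof.
  simpl hsat. destruct w.
  - destruct (classic (hsat pi true rho F)) as [HF|HF]; [left; auto | right].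
    destruct (classic (hsat pi false rho G)) as [HG|HG].
    + left. intros w' [-> | ->] HF'; [contradiction | auto].
    + right. intros w' [-> | ->] HG'; [apply HG; eapply persist; eauto; apply accessible_there | auto].
  - destruct (classic (hsat pi false rho F)) as [HF|HF]; [left; auto | right; left].
    intros w' Ha HF'. apply accessible_from_there in Ha; subst; contradiction.
Qed.

(** In the there-world a counterexample to [F] refutes [F -> forall x F]
    everywhere; if there is none, a counterexample in the here-world (or any
    value at all) witnesses the formula. *)
Lemma ex_imp_all_valid w rho x (F : form T (pred2 T)) :
  hsat pi w rho (FEx x (FImp F (FAll x F))).
Proof.
  rewrite hsat_ex.
  assert (Hall_of : forall w', (forall r, sort_fits P x r -> hsat pi w' (upd P rho x r) F) ->
                    forall r, hsat pi w' (upd P rho x r) (FAll x F)).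
  { intros w' Hq r. apply hsat_all; intros r' Hd'. apply hsat_upd_upd; auto. }
  destruct (classic (exists r, sort_fits P x r /\ ~ hsat pi false (upd P rho x r) F))
    as [[r [Hd Hr]] | Hn].
  { exists r; split; auto. intros w' Ha HF. exfalso; apply Hr.
    eapply persist; eauto; apply accessible_there. }
  assert (Hthere : forall r, sort_fits P x r -> hsat pi false (upd P rho x r) F).
  { intros r Hd; apply NNPP; intro; apply Hn; eauto. }
  destruct w.
  - destruct (classic (exists r, sort_fits P x r /\ ~ hsat pi true (upd P rho x r) F))
      as [[r [Hd Hr]] | Hn'].
    + exists r; split; auto. intros w' [-> | ->] HF; [contradiction|]. apply Hall_of; auto.
    + exists (num P 0); split; [apply sort_fits_zero|].
      intros w' [-> | ->] HF; apply Hall_of; auto.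
      intros r Hd; apply NNPP; intro; apply Hn'; eauto.
  - exists (num P 0); split; [apply sort_fits_zero|].
    intros w' Ha HF. apply accessible_from_there in Ha; subst. apply Hall_of; auto.
Qed.

Theorem Prov_valid (Ax : form T (pred2 T) -> Prop)
  (HAx : forall A, Ax A -> forall w rho, int_sorted P rho -> hsat pi w rho A) :
  forall A, Prov P Ax A -> forall w rho, int_sorted P rho -> hsat pi w rho A.
Proof.
  induction 1 as [A1 wa ha|A1 B1 wa wb|A1 B1 C1 wa wb wc|A1 B1 wa wb|A1 B1 wa wb|A1 B1 wa wb
    |A1 B1 wa wb|A1 B1 wa wb|A1 B1 C1 wa wb wc|A1 wa|x A1 t wa so ff|x A1 t wa so ff|t wt
    |x A1 s t wa so1 so2 ff1 ff2|A1 B1 p1 IH1 p2 IH2|x A1 B1 p IH nf|x A1 B1 p IH nf];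
    intros w rho Hr.
  - apply HAx; auto.
  - intros w' Ha HA w'' Ha' HB. eapply persist; eauto.
  - intros w1 _ K1 w2 Ha2 K2 w3 Ha3 K3.
    apply (K1 w3 (accessible_trans _ _ _ Ha3 Ha2) K3 w3 (accessible_refl _)). apply K2; auto.
  - intros w' _ [HA _]; auto.
  - intros w' _ [_ HB]; auto.
  - intros w' _ HA w'' Ha' HB; split; auto; eapply persist; eauto.
  - intros w' _ HA; left; auto.
  - intros w' _ HB; right; auto.
  - intros w1 _ HAC w2 Ha2 HBC w3 Ha3 [HA|HB].
    + apply (HAC w3 (accessible_trans _ _ _ Ha3 Ha2) HA).
    + apply (HBC w3 Ha3 HB).
  - intros w' _ [].
  - intros w' _ HA. destruct (sort_ok_denotes P rho x t Hr so) as [v [Hv Hd]].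
    apply (hsat_subst P pi x t A1 w' rho v); auto. rewrite hsat_all in HA; auto.
  - intros w' _ HA. destruct (sort_ok_denotes P rho x t Hr so) as [v [Hv Hd]].
    apply (hsat_subst P pi x t A1 w' rho v) in HA; auto.
    apply hsat_ex; eauto.
  - destruct (sort_ok_denotes P rho (SG, 0) t Hr wt) as [v [Hv _]].
    exists v; split; apply Hv; auto.
  - intros w' _ [r [Hs Ht]] w'' _ HA.
    destruct (sort_ok_denotes P rho x s Hr so1) as [vs [Hvs Hds]].
    destruct (sort_ok_denotes P rho x t Hr so2) as [vt [Hvt Hdt]].
    apply Hvs in Hs; apply Hvt in Ht; subst vs vt.
    apply (hsat_subst P pi x s A1 w'' rho r) in HA; auto.
    apply (hsat_subst P pi x t A1 w'' rho r); auto.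
  - apply (IH2 w rho Hr w (accessible_refl _)). apply IH1; auto.
  - intros w' Ha HB. apply hsat_all. intros r Hd.
    apply (IH w' (upd P rho x r) (int_sorted_upd P _ _ _ Hr Hd) w' (accessible_refl _)).
    apply hsat_upd_notfree; auto.
  - intros w' Ha HA. apply hsat_ex in HA. destruct HA as [r [Hd HA]].
    apply (hsat_upd_notfree P pi w' rho x r); auto.
    apply (IH w' (upd P rho x r) (int_sorted_upd P _ _ _ Hr Hd) w' (accessible_refl _) HA).
Qed.

End HilbertSoundness.

Section HTSharpSoundness.
Variable P : PT.
Notation T := (pt P).
Notation hsat := (hsat P).
Variables (H Tm : patom P -> Prop).
Hypothesis HTsub : forall a, H a -> Tm a.
Notation interp0 := (interp0 P H Tm).
Notation interp2 := (interp2 P H Tm).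

Lemma hsat_no_psym B : no_psym B -> forall w rho, hsat interp0 w rho B <-> ssat P rho B.
Proof.
  induction B; simpl; intros Hn w rho; try tauto.
  - destruct p; try tauto; simpl; split; intros [rs [H1 H2]]; exists rs; auto.
  - destruct Hn; rewrite IHB1, IHB2; tauto.
  - destruct Hn; rewrite IHB1, IHB2; tauto.
  - destruct Hn as [Hn1 Hn2]; split.
    + intros Hi Ha. apply (IHB2 Hn2 w), (Hi w (accessible_refl w)), (IHB1 Hn1 w); auto.
    + intros Hi w' _ Ha. apply (IHB2 Hn2 w'), Hi, (IHB1 Hn1 w'); auto.
  - destruct (fst x); split; intros Hq r; apply (IHB Hn w); apply Hq.
  - destruct (fst x); split; intros [r Hq]; exists r; apply (IHB Hn w); apply Hq.
Qed.

Lemma induction_valid (F : form T (pred2 T)) n w rho :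
  let N := FVar (SI, n) in
  hsat interp2 w rho
    (FImp (FAnd (subst (SI, n) (ncst P 0) F)
                (FAll (SI, n) (FImp (FAnd (cmp2 P PGe N (ncst P 0)) F)
                                    (subst (SI, n) (FAdd N (ncst P 1)) F))))
          (FAll (SI, n) (FImp (cmp2 P PGe N (ncst P 0)) F))).
Proof.
  intros N; subst N. intros w' _ [Hbase Hstep]. apply hsat_all. intros r Hd w'' Ha Hge.
  destruct (Hd eq_refl) as [m ->].
  assert (Hn : int_denotes P (upd P rho (SI, n) (num P m)) (FVar (SI, n)) m)
    by (apply int_denotes_var, upd_eq).
  rewrite hsat2_cmp2, (hsat_ge_num _ _ _ _ _ _ _ _ 0 Hn (int_denotes_cst _ _ 0)) in Hge.
  apply (hsat2_persist P H Tm HTsub _ w'') in Hbase, Hstep; auto.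
  assert (Hk : forall k : nat, hsat interp2 w'' (upd P rho (SI, n) (num P (Z.of_nat k))) F).
  { induction k as [|k IH].
    - apply (hsat_subst P interp2 (SI, n) (ncst P 0) F w'' rho); auto.
      + intros r; simpl; tauto.
      + apply free_for_closed; simpl; tauto.
    - rewrite hsat_all in Hstep.
      specialize (Hstep (num P (Z.of_nat k)) ltac:(intros _; eauto) w'' (accessible_refl _)).
      assert (Hk : int_denotes P (upd P rho (SI, n) (num P (Z.of_nat k))) (FVar (SI, n)) (Z.of_nat k))
        by (apply int_denotes_var, upd_eq).
      rewrite (hsat_subst P interp2 (SI, n) _ F w'' _ (num P (Z.of_nat (S k)))),
        hsat_upd_upd in Hstep.
      + apply Hstep. split; auto.
        apply hsat2_cmp2. rewrite (hsat_ge_num _ _ _ _ _ _ _ _ 0 Hk (int_denotes_cst _ _ 0)). lia.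
      + replace (Z.of_nat (S k)) with (Z.of_nat k + 1)%Z by lia.
        apply int_denotes_add; [apply Hk | apply int_denotes_cst].
      + apply free_for_closed; simpl. intros y [<- | []]; auto. }
  replace m with (Z.of_nat (Z.to_nat m)) by lia. apply Hk.
Qed.

Lemma HT_axioms_valid A : HT_axioms P A -> forall w rho, int_sorted P rho -> hsat interp2 w rho A.
Proof.
  intros [Ha | [Ha | [Ha | [Ha | [Ha | Ha]]]]]; intros w rho Hr.
  - destruct Ha as [F [G [_ [_ ->]]]]. apply weak_em_valid, interp2_persist; auto.
  - destruct Ha as [x [F [_ ->]]]. apply ex_imp_all_valid, interp2_persist; auto.
  - destruct Ha as [B [-> [_ [_ [Hn Hs]]]]]. rewrite hsat2_emb, hsat_no_psym; auto.
  - destruct Ha as [F [n [_ ->]]]. unfold closure. revert rho Hr.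
    apply hsat_alls_valid. intros rho _. apply induction_valid.
  - apply D0_valid; auto.
  - apply D1_valid; auto.
Qed.

Theorem HT_provable_valid A : HT_provable P A ->
  forall w rho, int_sorted P rho -> hsat interp2 w rho A.
Proof. apply Prov_valid; [apply interp2_persist; auto | apply HT_axioms_valid]. Qed.

End HTSharpSoundness.

Section InfinitaryHT.
Context {At : Type}.

Fixpoint ihsat (H Tm : At -> Prop) (w : bool) (F : iform At) : Prop :=
  match F with
  | IBot => False
  | IAtom a => (if w then H else Tm) a
  | IAnd _ f => forall i, ihsat H Tm w (f i)
  | IOr _ f => exists i, ihsat H Tm w (f i)
  | IImp F G => forall w', accessible w' w -> ihsat H Tm w' F -> ihsat H Tm w' G
  end.

Lemma ihsat_there H Tm F : ihsat H Tm false F <-> isat Tm F.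
Proof.
  induction F; simpl; try tauto.
  - split; intros Hq i; apply H0; auto.
  - split; intros [i Hi]; exists i; apply H0; auto.
  - split.
    + intros Hi HF. apply IHF2, Hi; [apply accessible_refl | apply IHF1; auto].
    + intros Hi w' Ha HF. destruct Ha as [-> | ->]; apply IHF2, Hi, IHF1; auto.
Qed.

Lemma ihsat_total M F : forall w, ihsat M M w F <-> isat M F.
Proof.
  induction F; simpl; intros w; try tauto.
  - destruct w; tauto.
  - split; intros Hq i; apply (H i w); auto.
  - split; intros [i Hi]; exists i; apply (H i w); auto.
  - split.
    + intros Hi HF. apply (IHF2 w), (Hi w); [apply accessible_refl | apply (IHF1 w); auto].
    + intros Hi w' Ha HF. apply (IHF2 w'), Hi, (IHF1 w'); auto.
Qed.

Lemma ihsat_persist H Tm (Hs : forall a, H a -> Tm a) F :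
  ihsat H Tm true F -> ihsat H Tm false F.
Proof.
  induction F; simpl; intros Hx; auto.
  - destruct Hx as [i Hi]; eauto.
  - intros w' Ha. apply Hx. right; destruct Ha; auto.
Qed.

Lemma isat_reduct J M (HJ : forall a, J a -> M a) F :
  isat J (reduct M F) <-> ihsat J M true F.
Proof.
  induction F; simpl.
  - destruct (excluded_middle_informative False); simpl; tauto.
  - destruct (excluded_middle_informative (M a)); simpl; [tauto|].
    split; [tauto|]. intros Ha; apply n, HJ; auto.
  - destruct (excluded_middle_informative (forall i, isat M (f i))) as [Hm|Hm]; simpl.
    + split; intros Hq i; apply H; auto.
    + split; [tauto|]. intros Hq; apply Hm. intros i. apply (ihsat_there J M), ihsat_persist; auto.
  - destruct (excluded_middle_informative (exists i, isat M (f i))) as [Hm|Hm]; simpl.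
    + split; intros [i Hi]; exists i; apply H; auto.
    + split; [tauto|]. intros [i Hi]; apply Hm. exists i.
      apply (ihsat_there J M), ihsat_persist; auto.
  - destruct (excluded_middle_informative (isat M F1 -> isat M F2)) as [Hm|Hm]; simpl.
    + rewrite IHF1, IHF2. split.
      * intros Hi w' [-> | ->]; auto. rewrite !ihsat_there; auto.
      * intros Hi; apply Hi, accessible_refl.
    + split; [tauto|]. intros Hi; apply Hm. intros H1. apply (ihsat_there J M).
      apply Hi; [apply accessible_there|]. apply ihsat_there; auto.
Qed.

Lemma isat_reduct_self (M : At -> Prop) F : isat M (reduct M F) <-> isat M F.
Proof. rewrite isat_reduct; auto. apply ihsat_total. Qed.

Section SameHTModels.
Variables F1 F2 : iform At.
Hypothesis HT_equiv : forall H Tm, (forall a, H a -> Tm a) ->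
  forall w, ihsat H Tm w F1 <-> ihsat H Tm w F2.

Lemma stable_model_transfer (Phi : iform At -> Prop) M :
  stable_model (fun F => F = F1 \/ Phi F) M -> stable_model (fun F => F = F2 \/ Phi F) M.
Proof.
  intros [S1 S2]. split.
  - intros F [-> | HF]; auto.
    rewrite isat_reduct_self, <- (ihsat_total M F2 false), <- (HT_equiv M M (fun a h => h) false),
      ihsat_total, <- isat_reduct_self.
    apply S1; auto.
  - intros J HJ HR. apply S2; auto. intros F [-> | HF]; auto.
    rewrite isat_reduct; auto. apply (HT_equiv J M HJ true). rewrite <- isat_reduct; auto.
Qed.

End SameHTModels.

Lemma stable_models_eq_of_ht_equiv (F1 F2 : iform At)
  (HT_equiv : forall H Tm, (forall a, H a -> Tm a) ->
     forall w, ihsat H Tm w F1 <-> ihsat H Tm w F2)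
  (Phi : iform At -> Prop) M :
  stable_model (fun F => F = F1 \/ Phi F) M <-> stable_model (fun F => F = F2 \/ Phi F) M.
Proof.
  split; apply stable_model_transfer; auto. intros; symmetry; apply HT_equiv; auto.
Qed.

End InfinitaryHT.

Section Counting.
Variable P : PT.
Notation T := (pt P).
Variables (H Tm : patom P -> Prop).
Notation lex_lt := (lex_lt P).
Notation start_chain := (start_chain P H Tm).
Notation cond_sat := (cond_sat P H Tm).

Lemma lex_lt_irrefl a : ~ lex_lt a a.
Proof.
  induction a; simpl; auto. intros [Hl | [_ Hl]]; [eapply ptlt_irrefl; eauto | auto].
Qed.

Lemma lex_lt_trans a : forall b c, lex_lt a b -> lex_lt b c -> lex_lt a c.
Proof.
  induction a as [|x a IH]; intros [|y b] [|z c]; simpl; auto; try tauto.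
  intros [H1 | [-> H1]] [H2 | [-> H2]]; auto.
  - left; eapply ptlt_trans; eauto.
  - right; split; eauto.
Qed.

Lemma lex_lt_total a : forall b, length a = length b -> lex_lt a b \/ a = b \/ lex_lt b a.
Proof.
  induction a as [|x a IH]; intros [|y b] Hl; simpl in *; try discriminate; auto.
  destruct (ptlt_total P x y) as [Hxy | [<- | Hyx]]; auto.
  destruct (IH b ltac:(lia)) as [Hl' | [<- | Hl']]; auto.
Qed.

Lemma lex_lt_least (k : nat) (D : list (list T)) : D <> [] -> (forall y, In y D -> length y = k) ->
  exists m, In m D /\ forall y, In y D -> y = m \/ lex_lt m y.
Proof.
  induction D as [|a D IH]; intros Hne Hl; [congruence|].
  destruct D as [|b D'].
  - exists a; split; simpl; auto. intros y [<- | []]; auto.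
  - destruct IH as [m [Hm Hmin]]; [discriminate | intros; apply Hl; simpl; auto |].
    destruct (lex_lt_total a m) as [Ham | [<- | Hma]].
    + rewrite (Hl a), (Hl m); simpl; auto.
    + exists a; split; simpl; auto. intros y [<- | Hy]; auto.
      destruct (Hmin y Hy) as [-> | Hmy]; auto. right; eapply lex_lt_trans; eauto.
    + exists a; split; simpl; auto. intros y [<- | Hy]; auto.
    + exists m; split; [simpl; auto|]. intros y [<- | Hy]; auto.
Qed.

Lemma start_chain_solutions X V F w vs n : forall xs, length xs = length X ->
  start_chain w X V F vs (S n) xs ->
  exists D, length D = S n /\ NoDup D /\
    (forall y, In y D -> length y = length X /\ cond_sat w X V F y vs) /\
    (forall y, In y D -> y = xs \/ lex_lt xs y).
Proof.
  induction n as [|n IH]; intros xs Hl Hs.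
  - destruct Hs as [Hf _]. exists [xs].
    split; [reflexivity|]. split; [constructor; [simpl; auto | constructor]|].
    split; intros y' [<- | []]; auto.
  - destruct Hs as [Hf [us [Hlu [Hlx Hs]]]].
    destruct (IH us Hlu Hs) as [D [HlD [Hnd [Hall Hge]]]].
    exists (xs :: D). split; [simpl; lia|]. split; [|split].
    + constructor; auto. intros Hin. destruct (Hge xs Hin) as [E|E].
      * subst; eapply lex_lt_irrefl; eauto.
      * eapply lex_lt_irrefl, lex_lt_trans; eauto.
    + intros y0 [<- | Hy]; [split; auto | apply Hall; auto].
    + intros y0 [<- | Hy]; auto. right. destruct (Hge y0 Hy) as [-> | E]; auto.
      eapply lex_lt_trans; eauto.
Qed.

(** Sorting [D] lexicographically turns it into a chain started by its least element. *)
Lemma start_chain_of_solutions X V F w vs n : forall D, length D = S n -> NoDup D ->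
  (forall y, In y D -> length y = length X /\ cond_sat w X V F y vs) ->
  exists m, In m D /\ start_chain w X V F vs (S n) m.
Proof.
  induction n as [|n IH]; intros D HlD Hnd Hall.
  - destruct D as [|a [|]]; simpl in HlD; try discriminate.
    exists a; split; simpl; auto. split; auto. apply Hall; simpl; auto.
  - destruct (lex_lt_least (length X) D) as [m [Hm Hmin]].
    + intro; subst; discriminate.
    + intros; apply Hall; auto.
    + apply in_split in Hm. destruct Hm as [D1 [D2 ->]].
      pose proof (NoDup_remove _ _ _ Hnd) as [Hnd' Hnin].
      assert (Hsub : forall y, In y (D1 ++ D2) -> In y (D1 ++ m :: D2)).
      { intros y Hy; apply in_app_or in Hy; apply in_or_app; simpl; tauto. }
      destruct (IH (D1 ++ D2)) as [m' [Hm' Hs']]; auto.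
      * rewrite length_app in *; simpl in HlD; lia.
      * exists m. split; [apply in_or_app; simpl; auto|].
        split; [apply Hall; apply in_or_app; simpl; auto|].
        exists m'. split; [apply Hall, Hsub; auto|]. split; auto.
        destruct (Hmin m' (Hsub _ Hm')) as [E|E]; auto. subst; contradiction.
Qed.

Lemma ple_trans a b c : (ptlt P a b \/ a = b) -> (ptlt P b c \/ b = c) -> (ptlt P a c \/ a = c).
Proof. intros [H1 | ->] [H2 | ->]; auto. left; eapply ptlt_trans; eauto. Qed.

Lemma ptlt_ple_absurd a b : ptlt P a b -> (ptlt P b a \/ b = a) -> False.
Proof. intros H1 [H2 | ->]; eapply ptlt_irrefl; [eapply ptlt_trans; eauto | eauto]. Qed.

Lemma atleast_iff_solutions X V F w vs c :
  (exists xs k, length xs = length X /\ start_chain w X V F vs (Z.to_nat k) xs /\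
     (ptlt P c (num P k) \/ num P k = c)) <->
  (exists D, delta_ok P (length X) D /\
     (ptlt P c (num P (Z.of_nat (length D))) \/ c = num P (Z.of_nat (length D))) /\
     forall x, In x D -> cond_sat w X V F x vs).
Proof.
  split.
  - intros [xs [k [Hl [Hs Hc]]]].
    destruct (Z.to_nat k) as [|n] eqn:Ek.
    + exists []. split; [split; constructor|]. split; [|intros _ []].
      assert (Hk : ptlt P (num P k) (num P 0) \/ num P k = num P 0) by (apply num_le; lia).
      simpl. apply (ple_trans c (num P k)); [destruct Hc; auto | exact Hk].
    + destruct (start_chain_solutions X V F w vs n xs Hl Hs) as [D [HlD [Hnd [Hall _]]]].
      exists D. split; [split; auto; apply Forall_forall; intros; apply Hall; auto|].
      split; [|intros; apply Hall; auto]. rewrite HlD. replace (Z.of_nat (S n)) with k by lia.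
      destruct Hc; auto.
  - intros [D [[Hnd HF] [Hc Hall]]]. rewrite Forall_forall in HF.
    destruct (length D) as [|n] eqn:HlD.
    + exists (repeat (num P 0) (length X)), 0%Z.
      split; [apply repeat_length|]. split; [simpl; auto|]. destruct Hc; auto.
    + destruct (start_chain_of_solutions X V F w vs n D HlD Hnd) as [m [Hm Hs]].
      { intros y Hy; split; auto. }
      exists m, (Z.of_nat (S n)). rewrite Nat2Z.id. split; auto. split; auto. destruct Hc; auto.
Qed.

Lemma atmost_iff_solutions X V F w vs c :
  (forall xs k, length xs = length X -> start_chain w X V F vs (Z.to_nat k) xs ->
     ptlt P (num P k) c \/ num P k = c) <->
  (forall D, delta_ok P (length X) D -> ptlt P c (num P (Z.of_nat (length D))) ->
     ~ (forall x, In x D -> cond_sat w X V F x vs)).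
Proof.
  split.
  - intros Hq D [Hnd HF] Hlt Hall. rewrite Forall_forall in HF.
    destruct (length D) as [|n] eqn:HlD.
    + specialize (Hq (repeat (num P 0) (length X)) 0%Z (repeat_length _ _) I).
      eapply ptlt_ple_absurd; eauto.
    + destruct (start_chain_of_solutions X V F w vs n D HlD Hnd) as [m [Hm Hs]].
      { intros y Hy; split; auto. }
      specialize (Hq m (Z.of_nat (S n)) (HF m Hm)). rewrite Nat2Z.id in Hq.
      eapply ptlt_ple_absurd; eauto.
  - intros Hq xs k Hl Hs.
    destruct (ptlt_total P c (num P k)) as [Hlt | [E | Hgt]]; auto.
    exfalso. destruct (Z.to_nat k) as [|n] eqn:Ek.
    + apply (Hq [] (conj (NoDup_nil _) (Forall_nil _))); [|intros _ []]. simpl.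
      assert (Hk : ptlt P (num P k) (num P 0) \/ num P k = num P 0) by (apply num_le; lia).
      destruct Hk as [Hk | Hk]; [eapply ptlt_trans; eauto | rewrite <- Hk; auto].
    + destruct (start_chain_solutions X V F w vs n xs Hl Hs) as [D [HlD [Hnd [Hall _]]]].
      apply (Hq D).
      * split; auto. apply Forall_forall; intros; apply Hall; auto.
      * rewrite HlD. replace (Z.of_nat (S n)) with k by lia. auto.
      * intros; apply Hall; auto.
Qed.

End Counting.

Section Translation.
Variable P : PT.
Notation T := (pt P).
Notation hsat := (hsat P).
Notation upd_list := (upd_list P).
Variables (H Tm : patom P -> Prop).
Notation interp0 := (interp0 P H Tm).
Notation interp2 := (interp2 P H Tm).
Notation ht := (ihsat H Tm).
Notation int_denotes := (int_denotes P).

Definition agree (th : nat -> T) (rho : var -> T) (l : list nat) :=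
  forall v, In v l -> th v = rho (SG, v).

(** [z] is not among the integer variables that [val] allocates from state [s]. *)
Definition not_fresh (z : var) (s : st) := forall k, z = (SI, k) -> k < snd s.

Lemma agree_upd_SI th rho l n r : agree th rho l -> agree th (upd P rho (SI, n) r) l.
Proof. intros Ha v Hv; rewrite upd_neq; [apply Ha; auto | discriminate]. Qed.

Lemma agree_sub th rho l1 l2 : agree th rho l2 -> (forall v, In v l1 -> In v l2) -> agree th rho l1.
Proof. intros Ha Hs v Hv; apply Ha, Hs; auto. Qed.

Lemma agree_app_l th rho l1 l2 : agree th rho (l1 ++ l2) -> agree th rho l1.
Proof. intros Ha; apply (agree_sub _ _ _ _ Ha); intros; apply in_or_app; auto. Qed.

Lemma agree_app_r th rho l1 l2 : agree th rho (l1 ++ l2) -> agree th rho l2.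
Proof. intros Ha; apply (agree_sub _ _ _ _ Ha); intros; apply in_or_app; auto. Qed.

Lemma not_fresh_neq z s k : not_fresh z s -> snd s <= k -> z <> ((SI, k) : var).
Proof. intros Hz Hk E. apply Hz in E. lia. Qed.

Lemma not_fresh_SG z s : fst z = SG -> not_fresh z s.
Proof. intros Hz k E; subst; discriminate. Qed.

Lemma SI_neq a b : a <> b -> ((SI, a) : var) <> (SI, b).
Proof. intros Hab E; inversion E; auto. Qed.

Lemma val_state t : forall z s,
  fst (snd (val P t z s)) = fst s /\ snd s <= snd (snd (val P t z s)).
Proof.
  induction t; intros z s; simpl; auto.
  2-3: specialize (IHt1 (SI, snd s) (fst s, S (S (S (snd s)))));
       destruct (val P t1 (SI, snd s) (fst s, S (S (S (snd s))))) as [F1 s1]; simpl in *;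
       specialize (IHt2 (SI, S (snd s)) s1);
       destruct (val P t2 (SI, S (snd s)) s1) as [F2 s2]; simpl in *; lia.
  specialize (IHt (SI, snd s) (fst s, S (snd s))).
  destruct (val P t (SI, snd s) (fst s, S (snd s))) as [F1 s1]; simpl in *; lia.
Qed.

Section Operands.
Variables (th : nat -> T) (a b : pterm T) (F1 F2 : form T pred0) (i j : nat) (w : bool).
Hypothesis Hij : i <> j.
Hypothesis val_a : forall rho, agree th rho (tvars a) ->
  (hsat interp0 w rho F1 <-> tval P th a (rho (SI, i))).
Hypothesis val_b : forall rho, agree th rho (tvars b) ->
  (hsat interp0 w rho F2 <-> tval P th b (rho (SI, j))).

Lemma hsat_two_operands rho (C : form T pred0) :
  agree th rho (tvars a) -> agree th rho (tvars b) ->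
  hsat interp0 w rho (FEx (SI, i) (FEx (SI, j) (FAnd F1 (FAnd F2 C)))) <->
  exists n1 n2, tval P th a (num P n1) /\ tval P th b (num P n2) /\
    hsat interp0 w (upd P (upd P rho (SI, i) (num P n1)) (SI, j) (num P n2)) C.
Proof.
  intros Ha Hb.
  assert (Vi : forall n1 n2, upd P (upd P rho (SI, i) (num P n1)) (SI, j) (num P n2) (SI, i) = num P n1)
    by (intros; rewrite upd_neq, upd_eq; auto using SI_neq).
  split.
  - intros [n1 [n2 [HF1 [HF2 HC]]]]. exists n1, n2.
    rewrite val_a, Vi in HF1 by (repeat apply agree_upd_SI; auto).
    rewrite val_b, upd_eq in HF2 by (repeat apply agree_upd_SI; auto). auto.
  - intros [n1 [n2 [HA [HB HC]]]]. exists n1, n2. split; [|split]; auto.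
    + rewrite val_a, Vi by (repeat apply agree_upd_SI; auto); auto.
    + rewrite val_b, upd_eq by (repeat apply agree_upd_SI; auto); auto.
Qed.

Lemma hsat_three_operands rho k (C : form T pred0) :
  k <> i -> k <> j -> agree th rho (tvars a) -> agree th rho (tvars b) ->
  hsat interp0 w rho (FEx (SI, i) (FEx (SI, j) (FEx (SI, k) (FAnd F1 (FAnd F2 C))))) <->
  exists n1 n2, tval P th a (num P n1) /\ tval P th b (num P n2) /\ exists n3,
    hsat interp0 w
      (upd P (upd P (upd P rho (SI, i) (num P n1)) (SI, j) (num P n2)) (SI, k) (num P n3)) C.
Proof.
  intros Hki Hkj Ha Hb.
  assert (Vi : forall n1 n2 n3, upd P (upd P (upd P rho (SI, i) (num P n1)) (SI, j) (num P n2))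
                                  (SI, k) (num P n3) (SI, i) = num P n1)
    by (intros; rewrite upd_neq, upd_neq, upd_eq; auto using SI_neq).
  assert (Vj : forall n1 n2 n3, upd P (upd P (upd P rho (SI, i) (num P n1)) (SI, j) (num P n2))
                                  (SI, k) (num P n3) (SI, j) = num P n2)
    by (intros; rewrite upd_neq, upd_eq; auto using SI_neq).
  split.
  - intros [n1 [n2 [n3 [HF1 [HF2 HC]]]]]. exists n1, n2.
    rewrite val_a, Vi in HF1 by (repeat apply agree_upd_SI; auto).
    rewrite val_b, Vj in HF2 by (repeat apply agree_upd_SI; auto). eauto.
  - intros [n1 [n2 [HA [HB [n3 HC]]]]]. exists n1, n2, n3. split; [|split]; auto.
    + rewrite val_a, Vi by (repeat apply agree_upd_SI; auto); auto.
    + rewrite val_b, Vj by (repeat apply agree_upd_SI; auto); auto.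
Qed.

End Operands.

Lemma hsat_div_cond w rho I J K n1 n2 n3 (E1 E2 : form T pred0) :
  int_denotes rho I n1 -> int_denotes rho J n2 -> int_denotes rho K n3 ->
  hsat interp0 w rho
    (FAnd (FAnd (FPred PLe [FMul K (FAbs J); FAbs I])
                (FPred PLt [FAbs I; FMul (FAdd K (FCst (num P 1))) (FAbs J)]))
          (FOr (FAnd (FPred PGe [FMul I J; FCst (num P 0)]) E1)
               (FAnd (FPred PLt [FMul I J; FCst (num P 0)]) E2))) <->
  ((n3 * Z.abs n2 <= Z.abs n1 < (n3 + 1) * Z.abs n2)%Z /\
   (((n1 * n2 >= 0)%Z /\ hsat interp0 w rho E1) \/ ((n1 * n2 < 0)%Z /\ hsat interp0 w rho E2))).
Proof.
  intros HI HJ HK.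
  assert (Hand : forall A B, hsat interp0 w rho (FAnd A B) <->
                             hsat interp0 w rho A /\ hsat interp0 w rho B) by reflexivity.
  assert (Hor : forall A B, hsat interp0 w rho (FOr A B) <->
                            hsat interp0 w rho A \/ hsat interp0 w rho B) by reflexivity.
  rewrite !Hand, Hor, !Hand.
  rewrite (hsat_le_num _ _ _ _ _ _ _ (n3 * Z.abs n2) (Z.abs n1)),
    (hsat_lt_num _ _ _ _ _ _ _ (Z.abs n1) ((n3 + 1) * Z.abs n2)),
    (hsat_ge_num _ _ _ _ _ _ _ (n1 * n2) 0), (hsat_lt_num _ _ _ _ _ _ _ (n1 * n2) 0).
  all: repeat first [apply int_denotes_mul | apply int_denotes_abs | apply int_denotes_add
                    | apply int_denotes_cst | assumption].
  split; intros [? [[? ?] | [? ?]]]; split; try lia; [left | right | left | right]; split; auto; lia.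
Qed.

Ltac upd_simpl := repeat first
  [ rewrite upd_eq | rewrite upd_neq by (first [apply SI_neq; lia | assumption]) ].
Ltac upd_simpl_in h := repeat first
  [ rewrite upd_eq in h | rewrite upd_neq in h by (first [apply SI_neq; lia | assumption]) ].
Ltac int_den := repeat first
  [ apply int_denotes_mul | apply int_denotes_abs | apply int_denotes_add | apply int_denotes_sub
  | apply int_denotes_cst | (apply int_denotes_var; upd_simpl; reflexivity) ].

Section ValCorrect.
Variable th : nat -> T.

Definition val_spec (t : pterm T) := forall z s rho w,
  agree th rho (tvars t) -> not_fresh z s ->
  (hsat interp0 w rho (fst (val P t z s)) <-> tval P th t (rho z)).

Lemma val_spec_abs a : val_spec a -> val_spec (PAbs a).
Proof.
  intros IH z s rho w Hag Hz. cbn [val tval].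
  pose proof (IH (SI, snd s) (fst s, S (snd s))) as K.
  destruct (val P a (SI, snd s) (fst s, S (snd s))) as [F1 s1]. simpl fst in K |- *.
  assert (Hzs : z <> (SI, snd s)) by (apply (not_fresh_neq z s); auto).
  assert (Hnf : not_fresh (SI, snd s) (fst s, S (snd s))) by (intros k E; inversion E; simpl; lia).
  split.
  - intros [n [HF1 HEq]].
    rewrite K, upd_eq in HF1 by (auto; apply agree_upd_SI; auto).
    erewrite hsat_eq_num in HEq by int_den. upd_simpl_in HEq. eauto.
  - intros [n [Hn HEq]]. exists n. split.
    + rewrite K, upd_eq by (auto; apply agree_upd_SI; auto). auto.
    + erewrite hsat_eq_num by int_den. upd_simpl. auto.
Qed.

(** The two operands of [t1 op t2] and [t1 .. t2] are evaluated into the fresh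
    integer variables [snd s] and [S (snd s)]; [S (S (snd s))] is reserved for
    the quotient and the interval element. *)
Ltac operands_setup IHa IHb a b z s F1 F2 V1 V2 :=
  pose proof (IHa (SI, snd s) (fst s, 3 + snd s)) as K1;
  pose proof (val_state a (SI, snd s) (fst s, 3 + snd s)) as St1;
  destruct (val P a (SI, snd s) (fst s, 3 + snd s)) as [F1 s1]; simpl fst in K1; simpl in St1;
  pose proof (IHb (SI, S (snd s)) s1) as K2;
  destruct (val P b (SI, S (snd s)) s1) as [F2 s2]; simpl fst in K2 |- *;
  assert (V1 : forall rho w, agree th rho (tvars a) ->
            (hsat interp0 w rho F1 <-> tval P th a (rho (SI, snd s))))
    by (intros; apply K1; auto; intros k E; inversion E; simpl; lia);
  assert (V2 : forall rho w, agree th rho (tvars b) ->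
            (hsat interp0 w rho F2 <-> tval P th b (rho (SI, S (snd s)))))
    by (intros; apply K2; auto; intros k E; inversion E; lia);
  assert (z <> (SI, snd s)) by (apply (not_fresh_neq z s); auto);
  assert (z <> (SI, S (snd s))) by (apply (not_fresh_neq z s); auto);
  assert (z <> (SI, S (S (snd s)))) by (apply (not_fresh_neq z s); auto);
  clear K1 K2 IHa IHb.

Lemma val_spec_bin o a b : val_spec a -> val_spec b -> val_spec (PBin o a b).
Proof.
  intros IHa IHb z s rho w Hag Hz. cbn [val tval].
  operands_setup IHa IHb a b z s F1 F2 V1 V2.
  pose proof (agree_app_l _ _ _ _ Hag) as Ha. pose proof (agree_app_r _ _ _ _ Hag) as Hb.
  destruct o; cbn [exs fold_right op2 binval].
  1-3: rewrite (hsat_two_operands th a b F1 F2 _ _ w) by (auto; lia);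
       split; intros [n1 [n2 [HA [HB HC]]]]; exists n1, n2; (split; [|split]); auto;
       [ erewrite hsat_eq_num in HC by int_den; upd_simpl_in HC
       | erewrite hsat_eq_num by int_den; upd_simpl ]; auto.
  all: rewrite (hsat_three_operands th a b F1 F2 _ _ w) by (auto; lia);
       split; [ intros [n1 [n2 [HA [HB [n3 HC]]]]] | intros [n1 [n2 [HA [HB [n3 [Hd HC]]]]]] ];
       exists n1, n2; (split; [|split]); auto; exists n3;
       [ rewrite (hsat_div_cond _ _ _ _ _ n1 n2 n3) in HC by int_den;
         destruct HC as [Hd [[Hs HE] | [Hs HE]]]; (split; auto);
         erewrite hsat_eq_num in HE by int_den; upd_simpl_in HE
       | rewrite (hsat_div_cond _ _ _ _ _ n1 n2 n3) by int_den;
         (split; auto); destruct HC as [[Hs HE] | [Hs HE]];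
         do 2 erewrite hsat_eq_num by int_den; upd_simpl ];
       solve [ left; split; auto; rewrite HE; f_equal; lia
             | right; split; auto; rewrite HE; f_equal; lia ].
Qed.

Lemma val_spec_intv a b : val_spec a -> val_spec b -> val_spec (PIntv a b).
Proof.
  intros IHa IHb z s rho w Hag Hz. cbn [val tval].
  operands_setup IHa IHb a b z s F1 F2 V1 V2.
  pose proof (agree_app_l _ _ _ _ Hag) as Ha. pose proof (agree_app_r _ _ _ _ Hag) as Hb.
  cbn [exs fold_right].
  rewrite (hsat_three_operands th a b F1 F2 _ _ w) by (auto; lia).
  split.
  - intros [n1 [n2 [HA [HB [n3 [[Hd1 Hd2] HEq]]]]]].
    rewrite (hsat_le_num _ _ _ _ _ _ _ n1 n3) in Hd1 by int_den.
    rewrite (hsat_le_num _ _ _ _ _ _ _ n3 n2) in Hd2 by int_den.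
    erewrite hsat_eq_num in HEq by int_den. upd_simpl_in HEq. exists n1, n2, n3. auto.
  - intros [n1 [n2 [n3 [HA [HB [Hd Hr]]]]]]. exists n1, n2. split; [|split]; auto.
    exists n3. split; [split|].
    + rewrite (hsat_le_num _ _ _ _ _ _ _ n1 n3) by int_den. lia.
    + rewrite (hsat_le_num _ _ _ _ _ _ _ n3 n2) by int_den. lia.
    + erewrite hsat_eq_num by int_den. upd_simpl. auto.
Qed.

Lemma val_correct t : val_spec t.
Proof.
  induction t as [c|v|a IHa|o a IHa b IHb|a IHa b IHb].
  - intros z s rho w _ _. simpl. split; [intros [r [-> ->]]; auto | intros ->; eauto].
  - intros z s rho w Hag _. simpl. rewrite (Hag v) by (simpl; auto).
    split; [intros [r [-> ->]]; auto | intros ->; eauto].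
  - apply val_spec_abs; auto.
  - apply val_spec_bin; auto.
  - apply val_spec_intv; auto.
Qed.

End ValCorrect.

Lemma fresh_gens_eq n : forall s, fresh_gens n s = (gv (seq (fst s) n), (fst s + n, snd s)).
Proof.
  induction n; intros s; simpl.
  - rewrite Nat.add_0_r; destruct s; auto.
  - rewrite IHn. simpl. f_equal. f_equal. lia.
Qed.

Lemma val_list_state ts : forall zs s,
  fst (snd (val_list P ts zs s)) = fst s /\ snd s <= snd (snd (val_list P ts zs s)).
Proof.
  induction ts as [|t ts IH]; intros zs s; destruct zs as [|z zs]; simpl; auto.
  pose proof (val_state t z s) as S1. destruct (val P t z s) as [F s1]. simpl in S1.
  specialize (IH zs s1). destruct (val_list P ts zs s1) as [Fs s2]. simpl in *; lia.
Qed.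

Lemma val_list_correct ts : forall zs s th rho w, length ts = length zs ->
  (forall z, In z zs -> fst z = SG) -> agree th rho (flat_map tvars ts) ->
  (hsat interp0 w rho (bigAnd (fst (val_list P ts zs s))) <-> Forall2 (tval P th) ts (map rho zs)).
Proof.
  induction ts as [|t ts IH]; intros zs s th rho w Hl Hs Ha; destruct zs as [|z zs];
    simpl in Hl; try discriminate.
  - simpl. split; auto.
  - cbn [val_list].
    pose proof (val_correct th t z s rho w) as K.
    destruct (val P t z s) as [F s1]. simpl fst in K.
    specialize (IH zs s1 th rho w).
    destruct (val_list P ts zs s1) as [Fs s2]. simpl fst in *.
    rewrite hsat_bigAnd_cons, IH, K; simpl map.
    + split; [intros [A1 A2]; constructor; auto | intros HF; inversion HF; auto].
    + eapply agree_app_l; eauto.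
    + apply not_fresh_SG, Hs; simpl; auto.
    + lia.
    + intros; apply Hs; simpl; auto.
    + eapply agree_app_r; eauto.
Qed.

Lemma hsat_signed w rho sg p n zs :
  hsat interp0 w rho (signedF P sg (FPred (PSym p n) (vts zs))) <->
  ht w (signed P sg (IAtom (p, map rho zs))).
Proof.
  assert (B : forall w, hsat interp0 w rho (FPred (PSym p n) (vts zs)) <-> ht w (IAtom (p, map rho zs)))
    by (intros; apply hsat_pred_vars).
  destruct sg; simpl.
  - apply B.
  - split; intros Hi w' Ha Hx; apply (Hi w' Ha); apply B; auto.
  - split; intros Hi w' Ha Hx; apply (Hi w' Ha); intros w'' Ha' Hy; apply (Hx w'' Ha'); apply B; auto.
Qed.

Lemma tauB_lit_state l s :
  fst s <= fst (snd (tauB_lit P l s)) /\ snd s <= snd (snd (tauB_lit P l s)).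
Proof.
  destruct l as [sg p ts|r a b]; cbn [tauB_lit].
  - rewrite fresh_gens_eq.
    pose proof (val_list_state ts (gv (seq (fst s) (length ts))) (fst s + length ts, snd s)) as S1.
    destruct (val_list P ts _ _) as [Fs s2]. simpl in *; lia.
  - pose proof (val_state a (SG, fst s) (2 + fst s, snd s)) as S1.
    destruct (val P a (SG, fst s) (2 + fst s, snd s)) as [F1 s1]. simpl in S1.
    pose proof (val_state b (SG, S (fst s)) s1) as S2.
    destruct (val P b (SG, S (fst s)) s1) as [F2 s2]. simpl in *; lia.
Qed.

Lemma hsat_cmp_form w rho r x y :
  hsat interp0 w rho (cmp_form P r (FVar x) (FVar y)) <-> relP P r (rho x) (rho y).
Proof.
  destruct r.
  1: simpl; split; [intros [r0 [-> ->]]; auto | intros E; exists (rho x); auto].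
  all: unfold cmp_form; change [FVar x; FVar y] with (@vts T [x; y]);
       rewrite hsat_pred_vars; reflexivity.
Qed.

Lemma tauB_atom_correct sg p ts s th rho w : agree th rho (flat_map tvars ts) ->
  (forall v, In v (flat_map tvars ts) -> v < fst s) ->
  (hsat interp0 w rho (fst (tauB_lit P (LAtom sg p ts) s)) <-> ht w (tau_lit P th (LAtom sg p ts))).
Proof.
  intros Ha Hlt. cbn [tauB_lit tau_lit]. rewrite fresh_gens_eq.
  pose proof (val_list_correct ts (gv (seq (fst s) (length ts))) (fst s + length ts, snd s) th) as K.
  destruct (val_list P ts _ _) as [Fs s2]. simpl fst in *.
  rewrite hsat_exs_gv. simpl ihsat.
  set (zs := gv (seq (fst s) (length ts))) in *.
  assert (ND : NoDup (seq (fst s) (length ts))) by apply seq_NoDup.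
  assert (LL : length (seq (fst s) (length ts)) = length ts) by apply length_seq.
  assert (Lz : length ts = length zs) by (unfold zs; rewrite gv_length; auto).
  assert (Hzs : forall z, In z zs -> fst z = SG) by (intros z Hz; apply gv_sort in Hz; auto).
  assert (Ag : forall vals, agree th (upd_list rho zs vals) (flat_map tvars ts)).
  { intros vals v Hv. rewrite upd_list_notin. apply Ha; auto.
    unfold zs. rewrite gv_in, in_seq. specialize (Hlt v Hv). lia. }
  subst zs. split.
  - intros [vals [Hl [Hb Hsg]]].
    rewrite K, map_upd_list_gv in Hb by (auto; lia).
    rewrite hsat_signed, map_upd_list_gv in Hsg by (auto; lia).
    exists (exist _ vals Hb). simpl. auto.
  - intros [[vals Hv] Hsg]. simpl in Hsg. exists vals.
    assert (Hl : length vals = length ts) by (symmetry; eapply Forall2_length; eauto).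
    split; [lia|]. split.
    + rewrite K, map_upd_list_gv by (auto; lia). auto.
    + rewrite hsat_signed, map_upd_list_gv by (auto; lia). auto.
Qed.

Lemma tauB_cmp_correct r a b s th rho w : agree th rho (tvars a ++ tvars b) ->
  (forall v, In v (tvars a ++ tvars b) -> v < fst s) ->
  (hsat interp0 w rho (fst (tauB_lit P (LCmp r a b) s)) <-> ht w (tau_lit P th (LCmp r a b))).
Proof.
  intros Ha Hlt. cbn [tauB_lit tau_lit].
  pose proof (val_correct th a (SG, fst s) (2 + fst s, snd s)) as K1.
  pose proof (val_state a (SG, fst s) (2 + fst s, snd s)) as S1.
  destruct (val P a (SG, fst s) (2 + fst s, snd s)) as [F1 s1]. simpl in S1. simpl fst in K1.
  pose proof (val_correct th b (SG, S (fst s)) s1) as K2.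
  destruct (val P b (SG, S (fst s)) s1) as [F2 s2]. simpl fst in *.
  cbn [exs fold_right].
  set (rho2 r1 r2 := upd P (upd P rho (SG, fst s) r1) (SG, S (fst s)) r2).
  assert (Ag : forall r1 r2, agree th (rho2 r1 r2) (tvars a ++ tvars b)).
  { intros r1 r2 v Hv. unfold rho2. rewrite !upd_neq. apply Ha; auto.
    all: intro E; inversion E; subst; specialize (Hlt _ Hv); lia. }
  assert (Hne : ((SG, fst s) : var) <> (SG, S (fst s))) by (intro E; inversion E; lia).
  assert (V1 : forall r1 r2, rho2 r1 r2 (SG, fst s) = r1)
    by (intros; unfold rho2; rewrite upd_neq, upd_eq; auto).
  assert (V2 : forall r1 r2, rho2 r1 r2 (SG, S (fst s)) = r2) by (intros; apply upd_eq).
  assert (E : forall r1 r2, hsat interp0 w (rho2 r1 r2)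
                 (FAnd F1 (FAnd F2 (cmp_form P r (FVar (SG, fst s)) (FVar (SG, S (fst s)))))) <->
               tval P th a r1 /\ tval P th b r2 /\ relP P r r1 r2).
  { intros r1 r2. simpl hsat at 1.
    rewrite K1, K2, hsat_cmp_form, V1, V2; try apply not_fresh_SG; auto.
    - reflexivity.
    - eapply agree_app_r; apply Ag.
    - eapply agree_app_l; apply Ag. }
  destruct (excluded_middle_informative
              (exists a0 b0, tval P th a a0 /\ tval P th b b0 /\ relP P r a0 b0))
    as [Hx | Hx]; simpl ihsat.
  - split; [intros _ [] | intros _].
    destruct Hx as [r1 [r2 Hr]]. exists r1, r2. apply E; auto.
  - split; [|intros []]. intros [r1 [r2 Hb]]. apply Hx. exists r1, r2. apply E; auto.
Qed.

Lemma tauB_lit_correct l s th rho w : agree th rho (lvars l) ->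
  (forall v, In v (lvars l) -> v < fst s) ->
  (hsat interp0 w rho (fst (tauB_lit P l s)) <-> ht w (tau_lit P th l)).
Proof.
  destruct l as [sg p ts | r a b].
  - apply tauB_atom_correct.
  - apply tauB_cmp_correct.
Qed.

Lemma tauB_list_state L : forall s,
  fst s <= fst (snd (tauB_list P L s)) /\ snd s <= snd (snd (tauB_list P L s)).
Proof.
  induction L as [|l L IH]; intros s; simpl; auto.
  pose proof (tauB_lit_state l s) as S1. destruct (tauB_lit P l s) as [F s1]. simpl in S1.
  specialize (IH s1). destruct (tauB_list P L s1) as [Fs s2]. simpl in *; lia.
Qed.

Lemma tauB_list_correct L : forall s th rho w, agree th rho (Lvars L) ->
  (forall v, In v (Lvars L) -> v < fst s) ->
  (hsat interp0 w rho (bigAnd (fst (tauB_list P L s))) <-> forall l, In l L -> ht w (tau_lit P th l)).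
Proof.
  induction L as [|l L IH]; intros s th rho w Ha Hlt.
  - simpl. split; auto. intros _ l [].
  - cbn [tauB_list].
    pose proof (tauB_lit_correct l s th rho w) as K.
    pose proof (tauB_lit_state l s) as S1.
    destruct (tauB_lit P l s) as [F s1]. simpl fst in *.
    specialize (IH s1 th rho w).
    destruct (tauB_list P L s1) as [Fs s2]. simpl fst in *.
    unfold Lvars in Ha, Hlt; simpl in Ha, Hlt.
    rewrite hsat_bigAnd_cons, IH, K.
    + split; [intros [A1 A2] l' [<- | Hl']; auto | intros Hq; split; intros; apply Hq; simpl; auto].
    + eapply agree_app_l; eauto.
    + intros v Hv; apply Hlt, in_or_app; auto.
    + eapply agree_app_r; eauto.
    + intros v Hv. assert (v < fst s) by (apply Hlt, in_or_app; auto). lia.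
Qed.

Lemma ext_notin vs xs th v : ~ In v vs -> ext P vs xs th v = th v.
Proof.
  revert xs; induction vs as [|a vs IH]; intros [|x xs] Hn; simpl; auto.
  destruct (Nat.eqb_spec v a); [subst; exfalso; apply Hn; simpl; auto|].
  apply IH; intro; apply Hn; simpl; auto.
Qed.

Lemma ext_map vs f th v : In v vs -> ext P vs (map f vs) th v = f v.
Proof.
  induction vs as [|a vs IH]; simpl; [tauto|]. intros Hv.
  destruct (Nat.eqb_spec v a); [subst; auto|]. apply IH. destruct Hv; [congruence | auto].
Qed.

Lemma upd_list_gv_ext r X xs th v : NoDup X -> length xs = length X -> In v X ->
  upd_list r (gv X) xs (SG, v) = ext P X xs th v.
Proof.
  revert r xs; induction X as [|a X IH]; intros r [|x xs] Hnd Hl Hin;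
    simpl in *; try discriminate; try tauto.
  inversion Hnd; subst.
  destruct (Nat.eqb_spec v a).
  - subst. rewrite upd_list_notin; [apply upd_eq|]. rewrite gv_in; auto.
  - destruct Hin as [E|Hin]; [congruence|]. apply IH; auto.
Qed.

Lemma ihsat_tau_elem w th X W L xs : ht w (tau_elem P th X W L xs) <->
  exists ws, length ws = length W /\
    forall l, In l L -> ht w (tau_lit P (ext P X xs (ext P W ws th)) l).
Proof.
  unfold tau_elem, tau_conj. simpl ihsat. split.
  - intros [[ws Hws] Hq]. exists ws; split; auto. intros l Hl. apply (Hq (exist _ l Hl)).
  - intros [ws [Hws Hq]]. exists (exist _ ws Hws). intros [l Hl]; simpl; auto.
Qed.

Lemma cond_sat_tau_elem w th rho X V W L s xs :
  NoDup X -> NoDup V -> NoDup W ->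
  (forall v, In v X -> ~ In v V) -> (forall v, In v W -> ~ In v X) ->
  (forall v, In v W -> ~ In v V) ->
  (forall v, In v (Lvars L) -> In v X \/ In v W \/ In v V) ->
  agree th rho V -> (forall v, In v (Lvars L) -> v < fst s) -> length xs = length X ->
  (cond_sat P H Tm w X V (exs (gv W) (bigAnd (fst (tauB_list P L s)))) xs (map rho (gv V)) <->
   ht w (tau_elem P th X W L xs)).
Proof.
  intros HnX HnV HnW HXV HWX HWV Hcov Hag Hlt Hl.
  unfold cond_sat. rewrite hsat_exs_gv, ihsat_tau_elem.
  assert (K : forall ws, length ws = length W ->
    (hsat interp0 w (upd_list (upd_list (upd_list (asg0 P) (gv X) xs) (gv V) (map rho (gv V)))
                              (gv W) ws) (bigAnd (fst (tauB_list P L s))) <->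
     forall l, In l L -> ht w (tau_lit P (ext P X xs (ext P W ws th)) l))).
  2: split; intros [ws [Hws Hb]]; exists ws; split; auto; apply K; auto.
  intros ws Hws. apply tauB_list_correct; auto.
  intros v Hv. destruct (classic (In v X)) as [HX|HX].
  - rewrite upd_list_notin; [|rewrite gv_in; intro; eapply HWX; eauto].
    rewrite upd_list_notin; [|rewrite gv_in; intro; eapply HXV; eauto].
    symmetry; apply upd_list_gv_ext; auto.
  - rewrite (ext_notin X); auto. destruct (classic (In v W)) as [HW|HW].
    + symmetry; apply upd_list_gv_ext; auto.
    + rewrite (ext_notin W); auto. rewrite upd_list_notin; [|rewrite gv_in; auto].
      destruct (Hcov v Hv) as [? | [? | HV]]; try tauto.
      rewrite upd_list_map_in; [|rewrite gv_in; auto]. apply Hag; auto.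
Qed.

Section CountAggregates.
Variables (X V : list nat) (F : form T pred0) (vs : list T) (E : list T -> iform (patom P)).
Hypothesis Hvs : length vs = length V.
Hypothesis HE : forall xs w, length xs = length X -> (cond_sat P H Tm w X V F xs vs <-> ht w (E xs)).

Let all_in (D : list (list T)) := IAnd {x : list T | In x D} (fun x => E (proj1_sig x)).

Lemma ihsat_all_in w D : Forall (fun x => length x = length X) D ->
  (ht w (all_in D) <-> forall x, In x D -> cond_sat P H Tm w X V F x vs).
Proof.
  intros HF. rewrite Forall_forall in HF. simpl. split.
  - intros Hq x Hx. apply HE; auto. apply (Hq (exist _ x Hx)).
  - intros Hq [x Hx]. apply HE; auto.
Qed.

Lemma atleast_correct w r :
  interp2 w (PAtleast X V F) (vs ++ [r]) <->
  ht w (IOr {D : list (list T) | delta_ok P (length X) D /\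
               (ptlt P r (num P (Z.of_nat (length D))) \/ r = num P (Z.of_nat (length D)))}
            (fun D => all_in (proj1_sig D))).
Proof.
  simpl interp2. rewrite firstn_app_exact, last_last by auto.
  rewrite atleast_iff_solutions. split.
  - intros [D [Hok [Hc Hall]]]. exists (exist _ D (conj Hok Hc)).
    apply (ihsat_all_in w D (proj2 Hok)); auto.
  - intros [[D [Hok Hc]] Hall]. exists D. split; auto. split; auto.
    apply (ihsat_all_in w D (proj2 Hok)); auto.
Qed.

Lemma atmost_correct w r :
  interp2 w (PAtmost X V F) (vs ++ [r]) <->
  ht w (IAnd {D : list (list T) | delta_ok P (length X) D /\ ptlt P r (num P (Z.of_nat (length D)))}
             (fun D => iNeg (all_in (proj1_sig D)))).
Proof.
  simpl interp2. rewrite firstn_app_exact, last_last by auto. split.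
  - intros Hq [D [Hok Hc]] w' Ha Hall.
    apply (proj1 (atmost_iff_solutions P H Tm X V F w' vs r) (Hq w' Ha) D Hok Hc).
    apply (ihsat_all_in w' D (proj2 Hok)); auto.
  - intros Hq w' Ha. apply atmost_iff_solutions. intros D Hok Hc Hall.
    apply (Hq (exist _ D (conj Hok Hc)) w' Ha). apply (ihsat_all_in w' D (proj2 Hok)); auto.
Qed.

End CountAggregates.

Lemma hsat_count_atom w rho th t c pr (Ft : form T pred0) V
  (G : {r : T | tval P th t r} -> iform (patom P)) :
  fst c = SG -> (forall z, In z (gv V) -> z <> c) ->
  (forall r w', hsat interp0 w' (upd P rho c r) Ft <-> tval P th t r) ->
  (forall r (Hr : tval P th t r) w',
     interp2 w' pr (map rho (gv V) ++ [r]) <-> ht w' (G (exist _ r Hr))) ->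
  hsat interp2 w rho (FEx c (FAnd (emb Ft) (FPred pr (vts (gv V) ++ [FVar c])))) <->
  ht w (IOr {r : T | tval P th t r} G).
Proof.
  intros Hc HVc Ht HG. rewrite hsat_ex. simpl ihsat.
  assert (Hatom : forall r Hr, hsat interp2 w (upd P rho c r) (FPred pr (vts (gv V) ++ [FVar c])) <->
                               ht w (G (exist _ r Hr))).
  { intros r Hr. rewrite hsat_pred_vars_last, map_upd_notin, upd_eq by auto. apply HG. }
  split.
  - intros [r [_ [Hr1 Hr2]]]. apply hsat2_emb, Ht in Hr1.
    exists (exist _ r Hr1). apply Hatom; auto.
  - intros [[r Hr1] Hr2]. exists r. split; [intros E; congruence|]. split.
    + apply hsat2_emb, Ht; auto.
    + apply (Hatom r Hr1); auto.
Qed.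

Lemma In_vvars (R : rule T) L v : In v (vvars R L) <-> In v (Lvars L) /\ In v (globals R).
Proof.
  unfold vvars. rewrite filter_In, nodup_In.
  destruct (in_dec Nat.eq_dec v (globals R)); split; intros [? ?]; auto; try discriminate; tauto.
Qed.

Lemma In_wvars (R : rule T) X L v :
  In v (wvars R X L) <-> In v (Lvars L) /\ ~ In v (globals R) /\ ~ In v X.
Proof.
  unfold wvars. rewrite filter_In, nodup_In.
  destruct (in_dec Nat.eq_dec v (globals R)); destruct (in_dec Nat.eq_dec v X); split;
    intros HH; try destruct HH as [? HH]; try discriminate; try tauto.
Qed.

Lemma count_elem_correct (R : rule T) X L s th rho w xs :
  NoDup X -> (forall x, In x X -> ~ In x (globals R)) -> agree th rho (globals R) ->
  (forall v, In v (Lvars L) -> v < fst s) -> length xs = length X ->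
  (cond_sat P H Tm w X (vvars R L) (exs (gv (wvars R X L)) (bigAnd (fst (tauB_list P L s))))
     xs (map rho (gv (vvars R L))) <->
   ht w (tau_elem P th X (wvars R X L) L xs)).
Proof.
  intros HnX HXg Hag HLlt Hl. apply cond_sat_tau_elem; auto.
  - apply NoDup_filter, NoDup_nodup.
  - apply NoDup_filter, NoDup_nodup.
  - intros v Hv HV. apply In_vvars in HV. apply (HXg v); tauto.
  - intros v Hv. apply In_wvars in Hv. tauto.
  - intros v Hv HV. apply In_wvars in Hv. apply In_vvars in HV. tauto.
  - intros v Hv. destruct (classic (In v (globals R))).
    + right; right; apply In_vvars; auto.
    + destruct (classic (In v X)); auto. right; left; apply In_wvars; auto.
  - intros v Hv. apply In_vvars in Hv. apply Hag; tauto.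
Qed.

Lemma star_count_correct (R : rule T) o X L t s th rho w :
  wf_belem R (BCount o X L t) -> agree th rho (globals R) ->
  (forall v, In v (tvars t) -> In v (globals R)) ->
  (forall v, In v (X ++ Lvars L ++ tvars t) -> v < fst s) ->
  (hsat interp2 w rho (fst (star P R (BCount o X L t) s)) <-> ht w (tau_belem P R th (BCount o X L t))).
Proof.
  intros [HnX [_ [_ HXg]]] Hag Hout Hlt. cbn [star].
  pose proof (val_correct th t (SG, fst s) (S (fst s), snd s)) as Kt.
  pose proof (val_state t (SG, fst s) (S (fst s), snd s)) as St.
  destruct (val P t (SG, fst s) (S (fst s), snd s)) as [Ft s1]. simpl in St; simpl fst in Kt.
  assert (HLlt : forall v, In v (Lvars L) -> v < fst s)
    by (intros v Hv; apply Hlt, in_or_app; right; apply in_or_app; auto).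
  assert (Ke : forall xs w', length xs = length X ->
     (cond_sat P H Tm w' X (vvars R L) (exs (gv (wvars R X L)) (bigAnd (fst (tauB_list P L s1))))
        xs (map rho (gv (vvars R L))) <-> ht w' (tau_elem P th X (wvars R X L) L xs)))
    by (intros; apply count_elem_correct; auto; intros v Hv; specialize (HLlt v Hv); lia).
  destruct (tauB_list P L s1) as [FL s2]. simpl fst in *.
  assert (Hkt : forall r w', hsat interp0 w' (upd P rho (SG, fst s) r) Ft <-> tval P th t r).
  { intros r w'. rewrite Kt; [rewrite upd_eq; tauto | | apply not_fresh_SG; auto].
    intros v Hv. rewrite upd_neq; [apply Hag, Hout; auto|].
    intro E; inversion E; subst.
    assert (fst s < fst s) by (apply Hlt, in_or_app; right; apply in_or_app; auto). lia. }
  assert (HVc : forall z, In z (gv (vvars R L)) -> z <> (SG, fst s)).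
  { intros z Hz ->. apply gv_in, In_vvars in Hz. destruct Hz as [Hz _].
    specialize (HLlt _ Hz). lia. }
  assert (LV : length (map rho (gv (vvars R L))) = length (vvars R L))
    by (rewrite length_map, gv_length; auto).
  destruct o; unfold tau_belem; apply hsat_count_atom; auto; intros r Hr w'; cbn [proj1_sig].
  - apply atleast_correct; auto.
  - apply atmost_correct; auto.
Qed.

Lemma star_correct (R : rule T) b s th rho w :
  wf_belem R b -> agree th rho (globals R) -> (forall v, In v (outer_vars b) -> In v (globals R)) ->
  (forall v, In v (belem_allvars P b) -> v < fst s) ->
  (hsat interp2 w rho (fst (star P R b s)) <-> ht w (tau_belem P R th b)).
Proof.
  intros Hwf Hag Hout Hlt. destruct b as [l | o X L t].
  - cbn [star]. pose proof (tauB_lit_correct l s th rho w) as K.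
    destruct (tauB_lit P l s) as [F s1]. simpl fst in *. rewrite hsat2_emb. apply K; auto.
    intros v Hv; apply Hag, Hout; auto.
  - apply star_count_correct; auto.
Qed.

Lemma star_state (R : rule T) b s : fst s <= fst (snd (star P R b s)).
Proof.
  destruct b as [l | o X L t]; cbn [star].
  - pose proof (tauB_lit_state l s) as S1. destruct (tauB_lit P l s); simpl in *; lia.
  - pose proof (val_state t (SG, fst s) (S (fst s), snd s)) as S1.
    destruct (val P t (SG, fst s) (S (fst s), snd s)) as [Ft s1]. simpl in S1.
    pose proof (tauB_list_state L s1) as S2. destruct (tauB_list P L s1) as [FL s2]. simpl in *; lia.
Qed.

Lemma star_list_state (R : rule T) bs : forall s, fst s <= fst (snd (star_list P R bs s)).
Proof.
  induction bs as [|b bs IH]; intros s; simpl; auto.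
  pose proof (star_state R b s) as S1. destruct (star P R b s) as [F s1]. simpl in S1.
  specialize (IH s1). destruct (star_list P R bs s1). simpl in *; lia.
Qed.

Lemma star_list_correct (R : rule T) bs : forall s th rho w,
  (forall b, In b bs -> wf_belem R b) -> agree th rho (globals R) ->
  (forall b, In b bs -> forall v, In v (outer_vars b) -> In v (globals R)) ->
  (forall b, In b bs -> forall v, In v (belem_allvars P b) -> v < fst s) ->
  (hsat interp2 w rho (bigAnd (fst (star_list P R bs s))) <->
   forall b, In b bs -> ht w (tau_belem P R th b)).
Proof.
  induction bs as [|b bs IH]; intros s th rho w Hwf Hag Hout Hlt.
  - simpl. split; auto. intros _ b [].
  - cbn [star_list].
    pose proof (star_correct R b s th rho w) as K.
    pose proof (star_state R b s) as S1.
    destruct (star P R b s) as [F s1]. simpl fst in *.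
    specialize (IH s1 th rho w).
    destruct (star_list P R bs s1) as [Fs s2]. simpl fst in *.
    rewrite hsat_bigAnd_cons, IH, K.
    + split; [intros [A1 A2] b' [<- | Hb']; auto | intros Hq; split; intros; apply Hq; simpl; auto].
    + apply Hwf; simpl; auto.
    + auto.
    + apply Hout; simpl; auto.
    + apply Hlt; simpl; auto.
    + intros; apply Hwf; simpl; auto.
    + auto.
    + intros; eapply Hout; simpl; eauto.
    + intros b' Hb' v Hv. specialize (Hlt b' (or_intror Hb') v Hv). lia.
Qed.

Definition rho_of (th : nat -> T) : var -> T :=
  fun y => match y with (SG, v) => th v | (SI, _) => num P 0 end.

Lemma closure_iff_instances {Pr} (pi : bool -> Pr -> list T -> Prop) w rho (A : form T Pr)
  G zs (Q : (nat -> T) -> list T -> Prop) :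
  int_sorted P rho -> NoDup zs -> (forall z, In z zs -> fst z = SG) ->
  (forall v, In v G -> ~ In (SG, v) zs) ->
  (forall th rho', agree th rho' G -> (hsat pi w rho' A <-> Q th (map rho' zs))) ->
  hsat pi w rho (closure A) <->
  forall xs, length xs = length G -> forall rs, length rs = length zs ->
    Q (ext P G xs (fun _ => num P 0)) rs.
Proof.
  intros Hr Hnd Hzs HGz HQ. rewrite hsat_closure by auto. split.
  - intros Hall xs _ rs Hl.
    set (th := ext P G xs (fun _ => num P 0)).
    set (rho' := upd_list (rho_of th) zs rs).
    assert (Ag : agree th rho' G).
    { intros v Hv. unfold rho'. rewrite upd_list_notin; auto. }
    rewrite <- (map_upd_list P (rho_of th) zs rs) by auto.
    apply HQ, Hall; auto. apply int_sorted_upd_list; auto. intros n; exists 0%Z; auto.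
  - intros Hall rho' Hw.
    set (xs := map (fun v => rho' (SG, v)) G).
    apply (HQ (ext P G xs (fun _ => num P 0))).
    + intros v Hv. unfold xs. rewrite ext_map; auto.
    + apply Hall; [apply length_map | apply length_map].
Qed.

Definition rule_vars (R : rule T) := head_vars (rhead R) ++ flat_map (belem_allvars P) (rbody R).

Lemma globals_in (R : rule T) v : In v (globals R) <->
  In v (head_vars (rhead R)) \/ exists b, In b (rbody R) /\ In v (outer_vars b).
Proof. unfold globals. rewrite nodup_In, in_app_iff, in_flat_map. tauto. Qed.

Lemma outer_vars_sub (b : belem T) v : In v (outer_vars b) -> In v (belem_allvars P b).
Proof. destruct b; simpl; auto. intros; apply in_or_app; right; apply in_or_app; auto. Qed.

Lemma globals_sub (R : rule T) v : In v (globals R) -> In v (rule_vars R).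
Proof.
  rewrite globals_in. unfold rule_vars. rewrite in_app_iff, in_flat_map.
  intros [Hv | [b [Hb Hv]]]; [left | right; exists b; split]; auto using outer_vars_sub.
Qed.

Section RuleCorrect.
Variables (R : rule T) (s : st).
Hypothesis Hwf : wf_rule R.
Hypothesis Hlt : forall v, In v (rule_vars R) -> v < fst s.

Let body th := IAnd {b : belem T | In b (rbody R)} (fun b => tau_belem P R th (proj1_sig b)).

Lemma body_correct th rho w : agree th rho (globals R) ->
  (hsat interp2 w rho (bigAnd (fst (star_list P R (rbody R) s))) <-> ht w (body th)).
Proof.
  intros Hag. rewrite (star_list_correct R (rbody R) s th rho w Hwf Hag).
  - simpl. split; [intros Hq [b Hb]; apply Hq; auto | intros Hq b Hb; apply (Hq (exist _ b Hb))].
  - intros b Hb v Hv. apply globals_in. right; eauto.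
  - intros b Hb v Hv. apply Hlt. unfold rule_vars. apply in_or_app; right. apply in_flat_map; eauto.
Qed.

Let inst xs := ext P (globals R) xs (fun _ => num P 0).

Lemma ihsat_instances (B : (nat -> T) -> iform (patom P)) w :
  ht w (IAnd {xs : list T | length xs = length (globals R)} (fun xs => B (inst (proj1_sig xs)))) <->
  forall xs, length xs = length (globals R) -> ht w (B (inst xs)).
Proof.
  simpl. split; [intros Hq xs Hl; apply (Hq (exist _ xs Hl)) | intros Hq [xs Hl]; apply Hq; auto].
Qed.

Lemma head_rule_correct (Bs : list (form T (pred2 T))) (Fs : list (form T pred0)) ts zs
  (Hd : form T (pred2 T)) (HI : list T -> iform (patom P)) w rho :
  int_sorted P rho -> NoDup zs -> length zs = length ts -> (forall z, In z zs -> fst z = SG) ->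
  (forall v, In v (globals R) -> ~ In (SG, v) zs) ->
  (forall th rho' w', agree th rho' (globals R) ->
     (hsat interp2 w' rho' (bigAnd Bs) <-> ht w' (body th))) ->
  (forall th rho' w', agree th rho' (globals R) ->
     (hsat interp0 w' rho' (bigAnd Fs) <-> Forall2 (tval P th) ts (map rho' zs))) ->
  (forall rho' w', hsat interp2 w' rho' Hd <-> ht w' (HI (map rho' zs))) ->
  hsat interp2 w rho (closure (FImp (bigAnd (Bs ++ [emb (bigAnd Fs)])) Hd)) <->
  ht w (IAnd {xs : list T | length xs = length (globals R)} (fun xs =>
          IImp (body (inst (proj1_sig xs)))
               (IAnd {rs : list T | Forall2 (tval P (inst (proj1_sig xs))) ts rs}
                     (fun rs => HI (proj1_sig rs))))).
Proof.
  intros Hr Hnd Hlz Hzs HGz Kb Kv Hhead.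
  etransitivity; [| symmetry; apply (ihsat_instances (fun th => IImp (body th)
    (IAnd {rs : list T | Forall2 (tval P th) ts rs} (fun rs => HI (proj1_sig rs)))))].
  rewrite (closure_iff_instances _ w rho _ (globals R) zs
    (fun th rs => forall w', accessible w' w ->
       ht w' (body th) /\ Forall2 (tval P th) ts rs -> ht w' (HI rs))) by
    (auto; intros th rho' Hag; simpl hsat at 1;
     setoid_rewrite hsat_bigAnd_app; setoid_rewrite hsat2_emb;
     setoid_rewrite (Kb th rho' _ Hag); setoid_rewrite (Kv th rho' _ Hag);
     setoid_rewrite Hhead; reflexivity).
  simpl ihsat. split.
  - intros Hall xs Hl w' Ha HB [rs Hrs]. apply (Hall xs Hl rs); auto.
    rewrite Hlz. symmetry. eapply Forall2_length; eauto.
  - intros Hall xs Hl rs _ w' Ha [HB Hrs]. apply (Hall xs Hl w' Ha HB (exist _ rs Hrs)).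
Qed.

Lemma empty_rule_correct (Bs : list (form T (pred2 T))) w rho :
  int_sorted P rho ->
  (forall th rho' w', agree th rho' (globals R) ->
     (hsat interp2 w' rho' (bigAnd Bs) <-> ht w' (body th))) ->
  hsat interp2 w rho (closure (FNot (bigAnd Bs))) <->
  ht w (IAnd {xs : list T | length xs = length (globals R)}
             (fun xs => iNeg (body (inst (proj1_sig xs))))).
Proof.
  intros Hr Kb.
  etransitivity; [| symmetry; apply (ihsat_instances (fun th => iNeg (body th)))].
  rewrite (closure_iff_instances _ w rho _ (globals R) [] (fun th _ => ht w (iNeg (body th))));
    [| auto | constructor | intros _ [] | intros _ _ [] |].
  2: intros th rho' Hag; simpl hsat at 1; simpl ihsat;
     setoid_rewrite (Kb th rho' _ Hag); reflexivity.
  split; [intros Hall xs Hl; apply (Hall xs Hl []); auto | intros Hall xs Hl _ _; apply Hall; auto].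
Qed.

Lemma tau_star_rule_correct w rho : int_sorted P rho ->
  hsat interp2 w rho (fst (tau_star_rule P R s)) <-> ht w (tau_rule P R).
Proof.
  intros Hr. unfold tau_star_rule, tau_rule.
  pose proof (star_list_state R (rbody R) s) as Sb.
  pose proof body_correct as Kb.
  destruct (star_list P R (rbody R) s) as [Bs s1]. simpl fst in Kb, Sb.
  assert (HG : forall v, In v (globals R) -> v < fst s1)
    by (intros v Hv; specialize (Hlt v (globals_sub R v Hv)); lia).
  assert (HH : forall v, In v (head_vars (rhead R)) -> In v (globals R))
    by (intros; apply globals_in; auto).
  destruct (rhead R) as [p ts | p ts |]; [| | apply empty_rule_correct; auto].
  all: rewrite fresh_gens_eq;
       set (zs := gv (seq (fst s1) (length ts)));
       assert (Lz : length ts = length zs) by (unfold zs; rewrite gv_length, length_seq; auto);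
       assert (Hzs : forall z, In z zs -> fst z = SG) by (intros z Hz; apply gv_sort in Hz; auto);
       assert (Hfresh : forall v, In v (globals R) -> ~ In (SG, v) zs)
         by (intros v Hv; unfold zs; rewrite gv_in, in_seq; specialize (HG v Hv); lia);
       pose proof (val_list_correct ts zs (fst s1 + length ts, snd s1)) as Kv;
       destruct (val_list P ts zs _) as [Fs s3]; simpl fst in *;
       assert (Kv' : forall th rho' w', agree th rho' (globals R) ->
                 (hsat interp0 w' rho' (bigAnd Fs) <-> Forall2 (tval P th) ts (map rho' zs)))
         by (intros th rho' w' Hag; apply Kv; auto; intros v Hv; apply Hag, HH; auto).
  - apply (head_rule_correct _ _ ts zs _ (fun rs => IAtom (p, rs))); auto.
    + apply gv_NoDup, seq_NoDup.
    + intros rho' w'. apply hsat_pred_vars.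
  - apply (head_rule_correct _ _ ts zs _
             (fun rs => iOr2 (IAtom (p, rs)) (iNeg (IAtom (p, rs))))); auto.
    + apply gv_NoDup, seq_NoDup.
    + intros rho' w'.
      assert (E : forall w'', hsat interp2 w'' rho' (FPred (P0 (PSym p (length ts))) (vts zs)) <->
                              ht w'' (IAtom (p, map rho' zs))) by (intros; apply hsat_pred_vars).
      split.
      * intros [Ha | Hn]; [exists true; apply E; auto | exists false].
        intros w'' Ha' Hx. apply (Hn w'' Ha'), E; auto.
      * intros [[|] Hb]; [left; apply E; auto | right].
        intros w'' Ha' Hx. apply (Hb w'' Ha'), E; auto.
Qed.

End RuleCorrect.

Lemma tau_star_rule_state (R : rule T) s : fst s <= fst (snd (tau_star_rule P R s)).
Proof.
  unfold tau_star_rule.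
  pose proof (star_list_state R (rbody R) s) as Sb.
  destruct (star_list P R (rbody R) s) as [Bs s1]. simpl in Sb.
  destruct (rhead R) as [p ts | p ts |]; try (simpl; lia); rewrite fresh_gens_eq;
    pose proof (val_list_state ts (gv (seq (fst s1) (length ts))) (fst s1 + length ts, snd s1)) as S2;
    destruct (val_list P ts _ _) as [Fs s3]; simpl in *; lia.
Qed.

Lemma tau_star_rules_correct Pi : forall s w rho, wf_program Pi ->
  (forall v, In v (prog_vars P Pi) -> v < fst s) -> int_sorted P rho ->
  (hsat interp2 w rho (bigAnd (tau_star_rules P Pi s)) <-> forall R, In R Pi -> ht w (tau_rule P R)).
Proof.
  induction Pi as [|R Pi IH]; intros s w rho Hwf Hlt Hr.
  - simpl. split; auto. intros _ R [].
  - cbn [tau_star_rules].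
    pose proof (tau_star_rule_correct R s) as K.
    pose proof (tau_star_rule_state R s) as S1.
    destruct (tau_star_rule P R s) as [F s1]. simpl fst in *.
    unfold prog_vars in Hlt; simpl in Hlt.
    rewrite hsat_bigAnd_cons, IH, K; auto.
    + split; [intros [A1 A2] R' [<- | HR']; auto | intros Hq; split; intros; apply Hq; simpl; auto].
    + apply Hwf; simpl; auto.
    + intros v Hv; apply Hlt, in_or_app; left; auto.
    + intros R' HR'; apply Hwf; simpl; auto.
    + intros v Hv. assert (v < fst s) by (apply Hlt, in_or_app; right; auto). lia.
Qed.

Lemma tau_star_correct Pi w rho : wf_program Pi -> int_sorted P rho ->
  (hsat interp2 w rho (tau_star P Pi) <-> ht w (tau_prog P Pi)).
Proof.
  intros Hwf Hr. unfold tau_star. rewrite tau_star_rules_correct; auto.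
  - unfold tau_prog. simpl. split.
    + intros Hq [R HR]; simpl; auto.
    + intros Hq R HR; apply (Hq (exist _ R HR)).
  - intros v Hv. simpl. assert (v <= list_max (prog_vars P Pi)); [|lia].
    pose proof (proj1 (list_max_le (prog_vars P Pi) _) (le_n _)) as L.
    rewrite Forall_forall in L. auto.
Qed.

End Translation.

Theorem theorem1 (P : PT) (Pi1 Pi2 : program (pt P)) :
  wf_program Pi1 -> wf_program Pi2 ->
  HT_provable P (FIff (tau_star P Pi1) (tau_star P Pi2)) ->
  strongly_equivalent P Pi1 Pi2.
Proof.
  intros Hw1 Hw2 Hprov Phi M.
  apply stable_models_eq_of_ht_equiv. intros H Tm HTsub w.
  assert (Hasg0 : int_sorted P (asg0 P)) by (intros n; exists 0%Z; auto).
  pose proof (HT_provable_valid P H Tm HTsub _ Hprov w (asg0 P) Hasg0) as Hvalid.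
  rewrite hsat_iff in Hvalid.
  rewrite <- !(tau_star_correct P H Tm _ w (asg0 P)) by auto.
  apply Hvalid, accessible_refl.
Qed.
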